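(* Let $G$ be a GP 2 host graph such that every node is marked grey, exactly one node is a root, every edge is unmarked and labelled with an integer, and there are no loops; let $n$ and $m$ be its numbers of nodes and edges. When the GP 2 program bellman-ford is executed on $G$ (via the GP 2-to-C compiler, under the cost model below), it terminates in time $\mathrm{O}(nm)$.
   Context: GP 2 semantics. Host graphs are finite directed graphs whose nodes and edges carry labels (lists of integers and strings; ''x:s'' denotes the list x followed by the atom s) and marks (nodes: unmarked, red, green, blue, grey; edges: unmarked, red, green, blue, dashed); some nodes are roots. A rule (with list variables x,y and integer variables i,s,t,w) is applied by finding an injective label- and mark-compatible match of its left-hand side (mark ''any'' matches every mark; roots match roots), satisfying the dangling condition and the rule's condition, then changing matched items as prescribed by the right-hand side. Commands: a rule set call applies one applicable rule, failing if none applies; $P;Q$ sequencing; $P!$ iterates $P$ until it fails; ''try $C$ then $P$ else $Q$'' runs $C$ and continues with $P$ on its result if it succeeded, else $Q$ on the original graph; ''if $C$ then $P$ else $Q$'' runs $C$ on a copy then $P$ or $Q$ on the original; fail causes failure. Cost model (updated GP 2-to-C compiler). Host nodes are stored in separate linked lists per node mark, roots in a list, and each node has a two-dimensional array of linked lists of incident edges indexed by edge mark and orientation (incoming, outgoing, loop). Each elementary operation takes constant time: fetch first/next node with a given mark; fetch first/next root; given a node, fetch first/next incoming, outgoing or loop edge with a given mark; read degrees, mark, root status, source, target; set/clear/test a ''matched'' flag. Matching is a search using these operations; once a match is found, completing a rule application takes constant time for the rules of this program. Running time is the total cost. The program bellman-ford: Main = set_counter; count!; (decrement; Relax!; Clean!)!;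 Final Relax = root1; try no_deg else ((unmarked_edge; try {unvisited, reduce}; finish)!; unroot1) Clean = root2; unmark_edge!; unroot2 Final = (root1; (unmarked_edge; if reduce then set_flag; finish)!; unroot1)!; if flag then fail; delete_counter; no_deg_inv! Rules (edges directed 1→2; labels unchanged unless stated): - set_counter(x): grey root labelled x becomes blue non-root labelled x:0; a new green node labelled 0 is created with a new dashed edge from it to node 1. - count(x; i): grey node 1 labelled x and green node 2 labelled i; node 1 becomes blue labelled x:''f'', node 2 labelled i+1. - decrement(i): green node labelled i with i>0; label becomes i−1. - root1: blue node becomes blue root. - no_deg(x): a blue root labelled x with no incident edges is replaced by an unmarked non-root node labelled x. - unmarked_edge: blue root 1, node 2 any mark, unmarked edge 1→2; edge becomes red. - unvisited(x,y; s,w): blue root 1 labelled x:s, node 2 labelled y:''f'', red edge labelled w; node 2 labelled y:(s+w). - reduce(x,y; s,t,w): blue root 1 labelled x:s, node 2 labelled y:t, red edge labelled w, condition s+w<t; node 2 labelled y:(s+w). - finish: blue root 1, red edge 1→2; edge becomes blue. - unroot1: blue root becomes grey non-root. - root2: grey node becomes blue root. - unmark_edge: blue root 1, blue edge 1→2; edge becomes unmarked. - unroot2: blue root becomes blue non-root. - set_flag: a green node's label becomes −1. - flag: green node labelled −1; no change. - delete_counter: a node 1 together with a green node and a dashed edge from the green node to node 1; the green node and dashed edge are deleted and node 1 becomes a root. - no_deg_inv: an unmarked node becomes grey. *)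

From Stdlib Require Import List ZArith String Bool Permutation Arith.
Import ListNotations.

Inductive atom := AInt (z : Z) | AStr (s : string).
Definition label := list atom.

Inductive nmark := NUn | NRed | NGreen | NBlue | NGrey.
Inductive emark := EUn | ERed | EGreen | EBlue | EDashed.

Definition nmark_beq (a b : nmark) : bool :=
  match a, b with
  | NUn, NUn | NRed, NRed | NGreen, NGreen | NBlue, NBlue | NGrey, NGrey => true
  | _, _ => false end.
Definition emark_beq (a b : emark) : bool :=
  match a, b with
  | EUn, EUn | ERed, ERed | EGreen, EGreen | EBlue, EBlue | EDashed, EDashed => true
  | _, _ => false end.

Record node := mkNode { nid : nat; nlab : label; nmk : nmark; nroot : bool }.
Record edge := mkEdge { eid : nat; esrc : nat; etgt : nat; elab : label; emk : emark }.
Record graph := mkGraph { gnodes : list node; gedges : list edge }.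

Definition num_nodes (G : graph) : nat := List.length (gnodes G).
Definition num_edges (G : graph) : nat := List.length (gedges G).

Definition find_node (G : graph) (v : nat) : option node :=
  find (fun x => Nat.eqb (nid x) v) (gnodes G).
Definition find_edge (G : graph) (e : nat) : option edge :=
  find (fun x => Nat.eqb (eid x) e) (gedges G).
Definition upd_node (G : graph) (v : nat) (f : node -> node) : graph :=
  mkGraph (map (fun x => if Nat.eqb (nid x) v then f x else x) (gnodes G)) (gedges G).
Definition upd_edge (G : graph) (e : nat) (f : edge -> edge) : graph :=
  mkGraph (gnodes G) (map (fun x => if Nat.eqb (eid x) e then f x else x) (gedges G)).
Definition del_node (G : graph) (v : nat) : graph :=
  mkGraph (filter (fun x => negb (Nat.eqb (nid x) v)) (gnodes G)) (gedges G).
Definition del_edge (G : graph) (e : nat) : graph :=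
  mkGraph (gnodes G) (filter (fun x => negb (Nat.eqb (eid x) e)) (gedges G)).
Definition fresh_nid (G : graph) : nat := S (fold_right Nat.max 0 (map nid (gnodes G))).
Definition fresh_eid (G : graph) : nat := S (fold_right Nat.max 0 (map eid (gedges G))).
Definition add_node (G : graph) (x : node) : graph := mkGraph (gnodes G ++ [x]) (gedges G).
Definition add_edge (G : graph) (e : edge) : graph := mkGraph (gnodes G) (gedges G ++ [e]).

Definition degree (G : graph) (v : nat) : nat :=
  List.length (filter (fun e => Nat.eqb (esrc e) v || Nat.eqb (etgt e) v) (gedges G)).

Definition set_mark (m : nmark) (x : node) : node := mkNode (nid x) (nlab x) m (nroot x).
Definition set_root (b : bool) (x : node) : node := mkNode (nid x) (nlab x) (nmk x) b.
Definition set_lab (l : label) (x : node) : node := mkNode (nid x) l (nmk x) (nroot x).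
Definition set_emark (m : emark) (e : edge) : edge := mkEdge (eid e) (esrc e) (etgt e) (elab e) m.

Definition last_int (l : label) : option (label * Z) :=
  match rev l with AInt s :: r => Some (rev r, s) | _ => None end.
Definition last_str (l : label) (s : string) : option label :=
  match rev l with AStr s' :: r => if String.eqb s s' then Some (rev r) else None | _ => None end.
Definition single_int (l : label) : option Z :=
  match l with [AInt i] => Some i | _ => None end.

Inductive orient := OIn | OOut | OLoop.
Inductive lkey :=
| KNodes (m : nmark)
| KRoots
| KEdges (v : nat) (m : emark) (o : orient).

Definition orient_ok (o : orient) (v : nat) (e : edge) : bool :=
  match o with
  | OIn => Nat.eqb (etgt e) v && negb (Nat.eqb (esrc e) v)
  | OOut => Nat.eqb (esrc e) v && negb (Nat.eqb (etgt e) v)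
  | OLoop => Nat.eqb (esrc e) v && Nat.eqb (etgt e) v
  end.

Definition canon (G : graph) (k : lkey) : list nat :=
  match k with
  | KNodes m => map nid (filter (fun x => nmark_beq (nmk x) m) (gnodes G))
  | KRoots => map nid (filter nroot (gnodes G))
  | KEdges v m o => map eid (filter (fun e => emark_beq (emk e) m && orient_ok o v e) (gedges G))
  end.

(* The order of the runtime linked lists is implementation-dependent; it is
   supplied by an arbitrary oracle (depending on the current time, the graph
   and the list), which must return a permutation of the list contents. *)
Definition oracle := nat -> graph -> lkey -> list nat -> list nat.
Definition valid_oracle (o : oracle) : Prop :=
  forall t G k l, Permutation (o t G k l) l.

(* search result: (cost, resulting graph if a match was found) *)
Definition res := (nat * option graph)%type.

(* fetch first/next element, 1 time unit per fetch (incl. the final null) *)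
Fixpoint first_match (f : nat -> res) (l : list nat) : res :=
  match l with
  | [] => (1, None)
  | x :: l' =>
      let '(c, r) := f x in
      match r with
      | Some _ => (S c, r)
      | None => let '(c', r') := first_match f l' in (S (c + c'), r')
      end
  end.

Definition iter (o : oracle) (t : nat) (G : graph) (k : lkey) (f : nat -> res) : res :=
  first_match f (o t G k (canon G k)).

Definition guard (b : bool) (k : res) : res :=
  if b then let '(c, r) := k in (S c, r) else (1, None).
Definition gopt {A} (x : option A) (k : A -> res) : res :=
  match x with Some a => let '(c, r) := k a in (S c, r) | None => (1, None) end.
Definition done (G : graph) : res := (1, Some G).

Definition rule := oracle -> nat -> graph -> res.

Definition blue_root (o : oracle) (t : nat) (G : graph) (k : nat -> node -> res) : res :=
  iter o t G KRoots (fun v => gopt (find_node G v) (fun x =>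
    guard (nmark_beq (nmk x) NBlue) (k v x))).

Definition r_set_counter : rule := fun o t G =>
  iter o t G KRoots (fun v => gopt (find_node G v) (fun x =>
    guard (nmark_beq (nmk x) NGrey)
      (let G1 := upd_node G v (fun y => mkNode (nid y) (nlab y ++ [AInt 0%Z]) NBlue false) in
       let g := fresh_nid G1 in
       let G2 := add_node G1 (mkNode g [AInt 0%Z] NGreen false) in
       done (add_edge G2 (mkEdge (fresh_eid G2) g v [] EDashed))))).

Definition r_count : rule := fun o t G =>
  iter o t G (KNodes NGrey) (fun v1 => gopt (find_node G v1) (fun _ =>
    iter o t G (KNodes NGreen) (fun v2 =>
      guard (negb (Nat.eqb v1 v2)) (gopt (find_node G v2) (fun x2 =>
        gopt (single_int (nlab x2)) (fun i =>
          done (upd_node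
                  (upd_node G v1 (fun y => mkNode (nid y) (nlab y ++ [AStr "f"%string]) NBlue (nroot y)))
                  v2 (set_lab [AInt (i + 1)%Z])))))))).

Definition r_decrement : rule := fun o t G =>
  iter o t G (KNodes NGreen) (fun v => gopt (find_node G v) (fun x =>
    gopt (single_int (nlab x)) (fun i =>
      guard (Z.ltb 0 i) (done (upd_node G v (set_lab [AInt (i - 1)%Z])))))).

Definition r_root1 : rule := fun o t G =>
  iter o t G (KNodes NBlue) (fun v => done (upd_node G v (set_root true))).

Definition r_no_deg : rule := fun o t G =>
  blue_root o t G (fun v _ =>
    guard (Nat.eqb (degree G v) 0)
      (done (upd_node G v (fun y => set_root false (set_mark NUn y))))).

Definition r_unmarked_edge : rule := fun o t G =>
  blue_root o t G (fun v _ =>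
    iter o t G (KEdges v EUn OOut) (fun e => gopt (find_edge G e) (fun ed =>
      guard (negb (Nat.eqb (etgt ed) v)) (done (upd_edge G e (set_emark ERed)))))).

Definition r_unvisited : rule := fun o t G =>
  blue_root o t G (fun v x =>
    gopt (last_int (nlab x)) (fun '(_, s) =>
    iter o t G (KEdges v ERed OOut) (fun e => gopt (find_edge G e) (fun ed =>
      gopt (single_int (elab ed)) (fun w =>
      guard (negb (Nat.eqb (etgt ed) v)) (gopt (find_node G (etgt ed)) (fun x2 =>
        gopt (last_str (nlab x2) "f"%string) (fun y =>
          done (upd_node G (etgt ed) (set_lab (y ++ [AInt (s + w)%Z]))))))))))).

Definition r_reduce : rule := fun o t G =>
  blue_root o t G (fun v x =>
    gopt (last_int (nlab x)) (fun '(_, s) =>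
    iter o t G (KEdges v ERed OOut) (fun e => gopt (find_edge G e) (fun ed =>
      gopt (single_int (elab ed)) (fun w =>
      guard (negb (Nat.eqb (etgt ed) v)) (gopt (find_node G (etgt ed)) (fun x2 =>
        gopt (last_int (nlab x2)) (fun '(y, tv) =>
          guard (Z.ltb (s + w) tv)
            (done (upd_node G (etgt ed) (set_lab (y ++ [AInt (s + w)%Z])))))))))))).

Definition r_finish : rule := fun o t G =>
  blue_root o t G (fun v _ =>
    iter o t G (KEdges v ERed OOut) (fun e => gopt (find_edge G e) (fun ed =>
      guard (negb (Nat.eqb (etgt ed) v)) (done (upd_edge G e (set_emark EBlue)))))).

Definition r_unroot1 : rule := fun o t G =>
  blue_root o t G (fun v _ => done (upd_node G v (fun y => set_root false (set_mark NGrey y)))).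

Definition r_root2 : rule := fun o t G =>
  iter o t G (KNodes NGrey) (fun v =>
    done (upd_node G v (fun y => set_root true (set_mark NBlue y)))).

Definition r_unmark_edge : rule := fun o t G =>
  blue_root o t G (fun v _ =>
    iter o t G (KEdges v EBlue OOut) (fun e => gopt (find_edge G e) (fun ed =>
      guard (negb (Nat.eqb (etgt ed) v)) (done (upd_edge G e (set_emark EUn)))))).

Definition r_unroot2 : rule := fun o t G =>
  blue_root o t G (fun v _ => done (upd_node G v (set_root false))).

Definition r_set_flag : rule := fun o t G =>
  iter o t G (KNodes NGreen) (fun v => gopt (find_node G v) (fun x =>
    gopt (single_int (nlab x)) (fun _ => done (upd_node G v (set_lab [AInt (-1)%Z]))))).

Definition r_flag : rule := fun o t G =>
  iter o t G (KNodes NGreen) (fun v => gopt (find_node G v) (fun x =>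
    gopt (single_int (nlab x)) (fun i => guard (Z.eqb i (-1)) (done G)))).

(* node 2 = green node (deleted), node 1 = target of its dashed edge.
   Dangling condition for the deleted green node: its degree must be 1. *)
Definition r_delete_counter : rule := fun o t G =>
  iter o t G (KNodes NGreen) (fun g =>
    iter o t G (KEdges g EDashed OOut) (fun e => gopt (find_edge G e) (fun ed =>
      guard (negb (Nat.eqb (etgt ed) g)) (
      guard (Nat.eqb (degree G g) 1)
        (done (upd_node (del_node (del_edge G e) g) (etgt ed) (set_root true))))))).

Definition r_no_deg_inv : rule := fun o t G =>
  iter o t G (KNodes NUn) (fun v => done (upd_node G v (set_mark NGrey))).

Inductive cmd :=
| Call (rs : list rule)         (* rule set call, rules tried in order *)
| Seq (p q : cmd)
| Loop (p : cmd)
| TryTE (c p q : cmd)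
| IfTE (c p q : cmd)
| Skip
| FailC.

Fixpoint apply_rules (o : oracle) (t : nat) (rs : list rule) (G : graph)
  : option graph * nat :=
  match rs with
  | [] => (None, t)
  | r :: rs' =>
      let '(c, rr) := r o t G in
      match rr with
      | Some G' => (Some G', t + c)
      | None => apply_rules o (t + c) rs' G
      end
  end.

(* exec o fuel P t G = Some (outcome, t') : P started at time t on G
   terminates (within recursion depth fuel) at time t', with outcome
   Some H (result graph) or None (failure).  None = fuel exhausted.
   Restoring a graph after a failed/discarded computation (try-else,
   if, failed loop body) is charged as much time as that computation. *)
Fixpoint exec (o : oracle) (fuel : nat) (P : cmd) (t : nat) (G : graph)
  : option (option graph * nat) :=
  match fuel with
  | 0 => None
  | S f =>
    match P with
    | Skip => Some (Some G, t)
    | FailC => Some (None, S t)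
    | Call rs => Some (apply_rules o t rs G)
    | Seq p q =>
        match exec o f p t G with
        | None => None
        | Some (None, t1) => Some (None, t1)
        | Some (Some G1, t1) => exec o f q t1 G1
        end
    | Loop p =>
        match exec o f p t G with
        | None => None
        | Some (None, t1) => Some (Some G, t1 + (t1 - t))
        | Some (Some G1, t1) => exec o f (Loop p) t1 G1
        end
    | TryTE c p q =>
        match exec o f c t G with
        | None => None
        | Some (Some G1, t1) => exec o f p t1 G1
        | Some (None, t1) => exec o f q (t1 + (t1 - t)) G
        end
    | IfTE c p q =>
        match exec o f c t G with
        | None => None
        | Some (Some _, t1) => exec o f p (t1 + (t1 - t)) G
        | Some (None, t1) => exec o f q (t1 + (t1 - t)) G
        end
    end
  end.

Definition R (r : rule) : cmd := Call [r].

Definition Relax : cmd :=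
  Seq (R r_root1)
      (TryTE (R r_no_deg) Skip
         (Seq (Loop (Seq (R r_unmarked_edge)
                         (Seq (TryTE (Call [r_unvisited; r_reduce]) Skip Skip)
                              (R r_finish))))
              (R r_unroot1))).

Definition Clean : cmd :=
  Seq (R r_root2) (Seq (Loop (R r_unmark_edge)) (R r_unroot2)).

Definition Final : cmd :=
  Seq (Loop (Seq (R r_root1)
                 (Seq (Loop (Seq (R r_unmarked_edge)
                                 (Seq (IfTE (R r_reduce) (R r_set_flag) Skip)
                                      (R r_finish))))
                      (R r_unroot1))))
      (Seq (IfTE (R r_flag) FailC Skip)
           (Seq (R r_delete_counter) (Loop (R r_no_deg_inv)))).

Definition bellman_ford : cmd :=
  Seq (R r_set_counter)
      (Seq (Loop (R r_count))
           (Seq (Loop (Seq (R r_decrement) (Seq (Loop Relax) (Loop Clean))))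
                Final)).

Definition input_ok (G : graph) : Prop :=
  NoDup (map nid (gnodes G)) /\
  NoDup (map eid (gedges G)) /\
  (forall e, In e (gedges G) ->
     In (esrc e) (map nid (gnodes G)) /\ In (etgt e) (map nid (gnodes G))) /\
  (forall x, In x (gnodes G) -> nmk x = NGrey) /\
  List.length (filter nroot (gnodes G)) = 1 /\
  (forall e, In e (gedges G) ->
     emk e = EUn /\ (exists z : Z, elab e = [AInt z]) /\ esrc e <> etgt e).

(* A green counter node g is attached to the root, which becomes blue; count! turns the other
   n - 1 nodes blue and leaves n - 1 in the label of g.  Each of the at most n - 1 rounds of the
   main loop decrements g, visits every blue node once (Relax!) and turns the visited, now grey,
   nodes blue again (Clean!); Final visits the blue nodes once more and deletes g.

   Each loop is paid for by a potential, a weighted count of the nodes or edges whose mark it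
   consumes.  Apart from the single delete_counter, every rule application takes constant time:
   the root list holds at most one node and the green list exactly one, every candidate of the
   other searches matches, and the root has at most one red out-edge.  Within a visit only labels
   and edge marks change, so visits are tracked up to the shape of the graph (identifiers, marks,
   roots and endpoints), which is all the runtime lists depend on.

   A round of the main loop costs O(B + m) when at most B nodes are blue or grey.  The first
   Relax! unmarks the isolated nodes and all later blue or grey nodes are non-isolated, so
   B <= 2m from the second round on, and the total is O(n + m + n m) = O(n m) since n >= 1. *)

From Stdlib Require Import String ZArith Bool List Permutation Lia.
Import ListNotations.

(** * Cost semantics *)

Inductive eval (o : oracle) : cmd -> nat -> graph -> option graph -> nat -> Prop :=
| eval_skip t G : eval o Skip t G (Some G) t
| eval_fail t G : eval o FailC t G None (S t)
| eval_call rs t G :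
    eval o (Call rs) t G (fst (apply_rules o t rs G)) (snd (apply_rules o t rs G))
| eval_seq p q t G G1 t1 r t2 :
    eval o p t G (Some G1) t1 -> eval o q t1 G1 r t2 -> eval o (Seq p q) t G r t2
| eval_seq_fail p q t G t1 :
    eval o p t G None t1 -> eval o (Seq p q) t G None t1
| eval_loop p t G G1 t1 r t2 :
    eval o p t G (Some G1) t1 -> eval o (Loop p) t1 G1 r t2 -> eval o (Loop p) t G r t2
| eval_loop_exit p t G t1 :
    eval o p t G None t1 -> eval o (Loop p) t G (Some G) (t1 + (t1 - t))
| eval_try p q c t G G1 t1 r t2 :
    eval o c t G (Some G1) t1 -> eval o p t1 G1 r t2 -> eval o (TryTE c p q) t G r t2
| eval_try_else p q c t G t1 r t2 :
    eval o c t G None t1 -> eval o q (t1 + (t1 - t)) G r t2 -> eval o (TryTE c p q) t G r t2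
| eval_if p q c t G G1 t1 r t2 :
    eval o c t G (Some G1) t1 -> eval o p (t1 + (t1 - t)) G r t2 -> eval o (IfTE c p q) t G r t2
| eval_if_else p q c t G t1 r t2 :
    eval o c t G None t1 -> eval o q (t1 + (t1 - t)) G r t2 -> eval o (IfTE c p q) t G r t2.

Lemma exec_fuel_mono o f f' P t G r :
  exec o f P t G = Some r -> f <= f' -> exec o f' P t G = Some r.
Proof.
  revert f' P t G r; induction f as [|f IH]; intros f' P t G r E Hf; [discriminate|].
  destruct f' as [|f']; [lia|]; apply le_S_n in Hf.
  destruct P; simpl in *; auto;
    match type of E with context [exec o f ?p t G] =>
      destruct (exec o f p t G) as [[[G1|] t1]|] eqn:E1; try discriminate;
      rewrite (IH f' _ _ _ _ E1 Hf); auto end.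
Qed.

Lemma eval_exec o P t G r t' :
  eval o P t G r t' -> exists fuel, exec o fuel P t G = Some (r, t').
Proof.
  induction 1.
  all: try (exists 1; simpl; try rewrite <- surjective_pairing; reflexivity).
  all: try (destruct IHeval as [f1 E1]; exists (S f1); simpl; rewrite E1; reflexivity).
  all: destruct IHeval1 as [f1 E1], IHeval2 as [f2 E2]; exists (S (Nat.max f1 f2)); simpl.
  all: rewrite (exec_fuel_mono _ _ (Nat.max f1 f2) _ _ _ _ E1) by lia.
  all: apply (exec_fuel_mono _ _ _ _ _ _ _ E2); lia.
Qed.

Lemma apply_rules_time o rs t G : t <= snd (apply_rules o t rs G).
Proof.
  revert t; induction rs as [|r rs IH]; intros t; simpl; auto.
  destruct (r o t G) as [c [G'|]]; simpl; [lia|]. specialize (IH (t + c)); lia.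
Qed.

Lemma eval_time o P t G r t' : eval o P t G r t' -> t <= t'.
Proof. induction 1; try lia. apply apply_rules_time. Qed.

Definition runs (o : oracle) (P : cmd) (t : nat) (G : graph) (Q : option graph -> nat -> Prop)
  : Prop := exists r t', eval o P t G r t' /\ Q r t'.

Lemma runs_exec o P t G Q :
  runs o P t G Q -> exists fuel r t', exec o fuel P t G = Some (r, t') /\ Q r t'.
Proof.
  intros [r [t' [E HQ]]]. destruct (eval_exec _ _ _ _ _ _ E) as [fuel Ef]. eauto.
Qed.

Lemma runs_weaken o P t G (Q Q' : option graph -> nat -> Prop) :
  runs o P t G Q -> (forall r t', Q r t' -> Q' r t') -> runs o P t G Q'.
Proof. intros [r [t' [E HQ]]] H. exists r, t'. auto. Qed.

Lemma runs_skip o t G (Q : option graph -> nat -> Prop) : Q (Some G) t -> runs o Skip t G Q.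
Proof. exists (Some G), t. split; [constructor|assumption]. Qed.

Lemma runs_fail o t G (Q : option graph -> nat -> Prop) : Q None (S t) -> runs o FailC t G Q.
Proof. exists None, (S t). split; [constructor|assumption]. Qed.

Lemma runs_call o rs t G (Q : option graph -> nat -> Prop) :
  Q (fst (apply_rules o t rs G)) (snd (apply_rules o t rs G)) -> runs o (Call rs) t G Q.
Proof. eexists _, _. split; [constructor|eassumption]. Qed.

Lemma runs_rule o r t G (Q : option graph -> nat -> Prop) :
  Q (snd (r o t G)) (t + fst (r o t G)) -> runs o (R r) t G Q.
Proof.
  intros H. apply runs_call. simpl. destruct (r o t G) as [c [G'|]]; exact H.
Qed.

Lemma runs_seq o p q t G (Q1 Q : option graph -> nat -> Prop) :
  runs o p t G Q1 ->
  (forall G1 t1, Q1 (Some G1) t1 -> runs o q t1 G1 Q) ->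
  (forall t1, Q1 None t1 -> Q None t1) ->
  runs o (Seq p q) t G Q.
Proof.
  intros [[G1|] [t1 [E1 H1]]] Hs Hn.
  - destruct (Hs _ _ H1) as [r [t2 [E2 H2]]]. exists r, t2. split; [eapply eval_seq; eauto|auto].
  - exists None, t1. split; [constructor|]; auto.
Qed.

Lemma runs_try o c p q t G (Q1 Q : option graph -> nat -> Prop) :
  runs o c t G Q1 ->
  (forall G1 t1, Q1 (Some G1) t1 -> runs o p t1 G1 Q) ->
  (forall t1, Q1 None t1 -> runs o q (t1 + (t1 - t)) G Q) ->
  runs o (TryTE c p q) t G Q.
Proof.
  intros [[G1|] [t1 [E1 H1]]] Hs Hn.
  - destruct (Hs _ _ H1) as [r [t2 [E2 H2]]]. exists r, t2. split; [eapply eval_try; eauto|auto].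
  - destruct (Hn _ H1) as [r [t2 [E2 H2]]]. exists r, t2. split; [eapply eval_try_else; eauto|auto].
Qed.

Lemma runs_if o c p q t G (Q1 Q : option graph -> nat -> Prop) :
  runs o c t G Q1 ->
  (forall G1 t1, Q1 (Some G1) t1 -> runs o p (t1 + (t1 - t)) G Q) ->
  (forall t1, Q1 None t1 -> runs o q (t1 + (t1 - t)) G Q) ->
  runs o (IfTE c p q) t G Q.
Proof.
  intros [[G1|] [t1 [E1 H1]]] Hs Hn.
  - destruct (Hs _ _ H1) as [r [t2 [E2 H2]]]. exists r, t2. split; [eapply eval_if; eauto|auto].
  - destruct (Hn _ H1) as [r [t2 [E2 H2]]]. exists r, t2. split; [eapply eval_if_else; eauto|auto].
Qed.

Lemma runs_loop_unfold o p t G (Q1 Q : option graph -> nat -> Prop) :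
  runs o p t G Q1 ->
  (forall G1 t1, Q1 (Some G1) t1 -> runs o (Loop p) t1 G1 Q) ->
  (forall t1, Q1 None t1 -> Q (Some G) (t1 + (t1 - t))) ->
  runs o (Loop p) t G Q.
Proof.
  intros [[G1|] [t1 [E1 H1]]] Hs Hn.
  - destruct (Hs _ _ H1) as [r [t2 [E2 H2]]]. exists r, t2. split; [eapply eval_loop; eauto|auto].
  - exists (Some G), (t1 + (t1 - t)). split; [constructor|]; auto.
Qed.

(* The failing last iteration is charged twice, as the graph is restored after it. *)
Lemma runs_loop o p (Inv Post : graph -> Prop) (Phi : graph -> nat) K :
  (forall G t, Inv G -> runs o p t G (fun r t1 => match r with
      | Some G1 => Inv G1 /\ t1 + Phi G1 + 1 <= t + Phi G
      | None => t1 <= t + K /\ Post G end)) ->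
  forall G t, Inv G -> runs o (Loop p) t G (fun r t' => exists G', r = Some G' /\
      Inv G' /\ Post G' /\ t' + Phi G' <= t + Phi G + 2 * K).
Proof.
  intros Hbody G. remember (Phi G) as n eqn:En. revert G En.
  induction n as [n IH] using lt_wf_ind; intros G En t HI.
  destruct (Hbody G t HI) as [[G1|] [t1 [E1 H1]]].
  - destruct H1 as [HI1 Hcost]. pose proof (eval_time _ _ _ _ _ _ E1).
    destruct (IH (Phi G1) ltac:(lia) G1 eq_refl t1 HI1) as [r [t2 [E2 [G' [-> H2]]]]].
    exists (Some G'), t2. split; [eapply eval_loop; eauto|]. exists G'. intuition lia.
  - destruct H1 as [Hcost HP]. exists (Some G), (t1 + (t1 - t)).
    split; [constructor; exact E1|]. exists G. intuition lia.
Qed.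

(** * Runtime lists and host graphs *)

Lemma first_match_cost f l K : (forall x, In x l -> fst (f x) <= K) ->
  fst (first_match f l) <= 1 + length l * S K.
Proof.
  induction l as [|x l IH]; intros H; simpl; [lia|].
  pose proof (H x (or_introl eq_refl)) as Hx.
  destruct (f x) as [c [G|]]; simpl in *; [lia|].
  assert (IHl : fst (first_match f l) <= 1 + length l * S K).
  { apply IH. intros y Hy. apply H. now right. }
  destruct (first_match f l) as [c' r']. simpl in *. lia.
Qed.

Lemma first_match_found f l H :
  snd (first_match f l) = Some H -> exists x, In x l /\ snd (f x) = Some H.
Proof.
  induction l as [|x l IH]; simpl; intros E; [discriminate|].
  destruct (f x) as [c [G|]] eqn:Ef.
  - exists x. rewrite Ef. auto.
  - destruct (first_match f l) as [c' r'] eqn:E'. simpl in E.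
    destruct (IH E) as [y [Hy Hy']]. eauto.
Qed.

Section Search.
Variables (o : oracle) (t : nat) (G : graph) (k : lkey) (f : nat -> res).
Hypothesis Ho : valid_oracle o.

Lemma iter_cost K : (forall x, In x (canon G k) -> fst (f x) <= K) ->
  fst (iter o t G k f) <= 1 + length (canon G k) * S K.
Proof.
  intros H. unfold iter. pose proof (Ho t G k (canon G k)) as P.
  rewrite <- (Permutation_length P). apply first_match_cost.
  intros x Hx. apply H. eapply Permutation_in; eauto.
Qed.

Lemma iter_found H :
  snd (iter o t G k f) = Some H -> exists x, In x (canon G k) /\ snd (f x) = Some H.
Proof.
  intros E. apply first_match_found in E. destruct E as [x [Hx E]].
  exists x. split; auto. eapply Permutation_in; eauto.
Qed.

Lemma iter_empty : canon G k = [] -> iter o t G k f = (1, None).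
Proof.
  intros E. unfold iter. pose proof (Ho t G k (canon G k)) as P. rewrite E in *.
  apply Permutation_sym, Permutation_nil in P. rewrite P. reflexivity.
Qed.

Lemma iter_singleton x : canon G k = [x] ->
  fst (iter o t G k f) <= S (S (fst (f x))) /\ snd (iter o t G k f) = snd (f x).
Proof.
  intros E. unfold iter. pose proof (Ho t G k (canon G k)) as P. rewrite E in *.
  apply Permutation_sym, Permutation_length_1_inv in P. rewrite P. simpl.
  destruct (f x) as [c [G'|]]; simpl; split; auto; lia.
Qed.

(* With every candidate matching, the search stops at the first one. *)
Lemma iter_all_match K : canon G k <> [] ->
  (forall x, In x (canon G k) -> fst (f x) <= K /\ snd (f x) <> None) ->
  fst (iter o t G k f) <= S K /\ snd (iter o t G k f) <> None.
Proof.
  intros Hne H. unfold iter. pose proof (Ho t G k (canon G k)) as P.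
  destruct (o t G k (canon G k)) as [|x l].
  - apply Permutation_nil in P. congruence.
  - assert (Hx : In x (canon G k)) by (eapply Permutation_in; eauto; left; auto).
    destruct (H x Hx) as [H1 H2]. simpl.
    destruct (f x) as [c [G'|]]; simpl in *; [split; [lia|discriminate]|congruence].
Qed.

End Search.

Lemma iter_pick o t G k (h : nat -> graph) : valid_oracle o ->
  (canon G k = [] /\ iter o t G k (fun v => done (h v)) = (1, None)) \/
  (exists v, In v (canon G k) /\ iter o t G k (fun v => done (h v)) = (2, Some (h v))).
Proof.
  intros Ho. destruct (canon G k) eqn:E; [left; split; auto; apply iter_empty; auto|right].
  unfold iter. pose proof (Ho t G k (canon G k)) as P.
  destruct (o t G k (canon G k)) as [|x l'].
  - apply Permutation_nil in P. congruence.
  - exists x. split; [|reflexivity]. rewrite <- E. eapply Permutation_in; [exact P|left; auto].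
Qed.

Definition updl {A} (id : A -> nat) (v : nat) (f : A -> A) (l : list A) : list A :=
  map (fun y => if Nat.eqb (id y) v then f y else y) l.

Section ListUpdate.
Context {A : Type} (id : A -> nat) (v : nat) (f : A -> A).
Hypothesis f_id : forall y, id (f y) = id y.

Lemma map_updl {B} (p : A -> B) l : (forall y, p (f y) = p y) -> map p (updl id v f l) = map p l.
Proof.
  intros H. unfold updl. rewrite map_map. apply map_ext. intros y. destruct (Nat.eqb (id y) v); auto.
Qed.

Lemma in_updl l z : In z (updl id v f l) <-> exists y, In y l /\ z = if Nat.eqb (id y) v then f y else y.
Proof. unfold updl. rewrite in_map_iff. split; intros [y [H1 H2]]; eauto. Qed.

Lemma updl_notin l : ~ In v (map id l) -> updl id v f l = l.
Proof.
  induction l as [|y l IH]; simpl; intros H; auto.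
  destruct (Nat.eqb_spec (id y) v); [tauto|]. f_equal. auto.
Qed.

Lemma count_updl (P : A -> bool) l x : NoDup (map id l) -> In x l -> id x = v ->
  length (filter P (updl id v f l)) + (if P x then 1 else 0) =
  length (filter P l) + (if P (f x) then 1 else 0).
Proof.
  induction l as [|y l IH]; simpl; intros ND Hin Hid; [tauto|].
  inversion ND as [|a b Hy ND' E]; subst a b. destruct Hin as [->|Hin].
  - rewrite Hid, Nat.eqb_refl. rewrite updl_notin by (rewrite <- Hid; auto).
    destruct (P (f x)), (P x); simpl; lia.
  - assert (Hne : id y <> v) by (intros E; apply Hy; rewrite E, <- Hid; apply in_map; auto).
    apply Nat.eqb_neq in Hne. rewrite Hne. specialize (IH ND' Hin Hid).
    destruct (P y); simpl; lia.
Qed.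

Lemma filter_updl (P : A -> bool) l :
  (forall y, In y l -> id y = v -> P (f y) = P y) ->
  map id (filter P (updl id v f l)) = map id (filter P l).
Proof.
  induction l as [|y l IH]; simpl; intros H; auto.
  destruct (Nat.eqb_spec (id y) v) as [E|E].
  - rewrite (H y (or_introl eq_refl) E).
    destruct (P y); simpl; [rewrite f_id; f_equal|]; apply IH; auto.
  - destruct (P y); simpl; [f_equal|]; apply IH; auto.
Qed.

End ListUpdate.

Lemma find_map {A} (p : A -> bool) h l : (forall y, p (h y) = p y) ->
  find p (map h l) = option_map h (find p l).
Proof. intros H. induction l as [|y l IH]; simpl; auto. rewrite H. destruct (p y); auto. Qed.

Lemma find_by_id {A} (id : A -> nat) l x : NoDup (map id l) -> In x l ->
  find (fun y => Nat.eqb (id y) (id x)) l = Some x.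
Proof.
  induction l as [|y l IH]; simpl; intros ND Hin; [tauto|]. inversion ND; subst.
  destruct Hin as [<-|Hin]; [rewrite Nat.eqb_refl; auto|].
  destruct (Nat.eqb_spec (id y) (id x)) as [E|E]; auto.
  exfalso. match goal with H : ~ In _ _ |- _ => apply H end. rewrite E. apply in_map. auto.
Qed.

Lemma in_map_filter {A} (id : A -> nat) (P : A -> bool) l w :
  In w (map id (filter P l)) <-> exists x, In x l /\ id x = w /\ P x = true.
Proof.
  rewrite in_map_iff. split.
  - intros [x [E H]]. apply filter_In in H. exists x. tauto.
  - intros [x [H [E HP]]]. exists x. split; auto. apply filter_In. auto.
Qed.

Lemma NoDup_map_filter {A} (id : A -> nat) (P : A -> bool) l :
  NoDup (map id l) -> NoDup (map id (filter P l)).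
Proof.
  induction l as [|y l IH]; simpl; intros ND; auto. inversion ND; subst.
  destruct (P y); simpl; auto. constructor; auto. intros Hin. apply in_map_filter in Hin.
  destruct Hin as [z [Hz [E _]]]. match goal with H : ~ In _ _ |- _ => apply H end.
  rewrite <- E. apply in_map. auto.
Qed.

Lemma fresh_notin l : ~ In (S (fold_right Nat.max 0 l)) l.
Proof.
  assert (H : forall y, In y l -> y < S (fold_right Nat.max 0 l)).
  { induction l as [|a l IH]; simpl; [tauto|]. intros y [->|Hy]; [lia|]. specialize (IH y Hy). lia. }
  intros Hin. specialize (H _ Hin). lia.
Qed.

Lemma NoDup_snoc {A} (l : list A) a : NoDup l -> ~ In a l -> NoDup (l ++ [a]).
Proof.
  intros H1 H2. apply Permutation_NoDup with (a :: l); [apply Permutation_cons_append|constructor; auto].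
Qed.

Lemma filter_none {A} (P : A -> bool) l : (forall y, In y l -> P y = false) -> filter P l = [].
Proof. induction l as [|a l IH]; simpl; intros H; auto. rewrite (H a (or_introl eq_refl)). auto. Qed.

Lemma find_app_none {A} (p : A -> bool) l1 l2 :
  (forall y, In y l1 -> p y = false) -> find p (l1 ++ l2) = find p l2.
Proof. induction l1 as [|a l IH]; simpl; intros H; auto. rewrite (H a (or_introl eq_refl)). auto. Qed.

Lemma nmark_beq_spec a b : nmark_beq a b = true <-> a = b.
Proof. destruct a, b; simpl; split; intros; congruence. Qed.
Lemma emark_beq_spec a b : emark_beq a b = true <-> a = b.
Proof. destruct a, b; simpl; split; intros; congruence. Qed.
Lemma emark_beq_refl a : emark_beq a a = true.
Proof. destruct a; auto. Qed.

Definition uniq_ids (G : graph) : Prop :=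
  NoDup (map nid (gnodes G)) /\ NoDup (map eid (gedges G)).

Definition keeps_nid (f : node -> node) : Prop := forall y, nid (f y) = nid y.

Lemma uniq_ids_upd_node G v f : keeps_nid f -> uniq_ids G -> uniq_ids (upd_node G v f).
Proof. intros Hf [A B]. split; auto. simpl. fold (updl nid v f (gnodes G)). rewrite map_updl; auto. Qed.

Lemma uniq_ids_upd_edge G e m : uniq_ids G -> uniq_ids (upd_edge G e (set_emark m)).
Proof.
  intros [A B]. split; auto. simpl. fold (updl eid e (set_emark m) (gedges G)).
  rewrite map_updl; auto.
Qed.

Lemma find_node_in G w x : find_node G w = Some x -> In x (gnodes G) /\ nid x = w.
Proof. intros H. apply find_some in H. destruct H as [H1 H2]. apply Nat.eqb_eq in H2. auto. Qed.

Lemma find_edge_in G w x : find_edge G w = Some x -> In x (gedges G) /\ eid x = w.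
Proof. intros H. apply find_some in H. destruct H as [H1 H2]. apply Nat.eqb_eq in H2. auto. Qed.

Lemma find_node_of G x : uniq_ids G -> In x (gnodes G) -> find_node G (nid x) = Some x.
Proof. intros [A _] H. apply (find_by_id nid); auto. Qed.

Lemma find_edge_of G x : uniq_ids G -> In x (gedges G) -> find_edge G (eid x) = Some x.
Proof. intros [_ A] H. apply (find_by_id eid); auto. Qed.

Lemma find_node_unique G v x y :
  uniq_ids G -> find_node G v = Some x -> In y (gnodes G) -> nid y = v -> y = x.
Proof. intros HW Hf Hy <-. rewrite find_node_of in Hf by auto. congruence. Qed.

Lemma find_node_upd G v f w : keeps_nid f ->
  find_node (upd_node G v f) w =
  option_map (fun y => if Nat.eqb (nid y) v then f y else y) (find_node G w).
Proof.
  intros Hf. apply find_map. intros y. destruct (Nat.eqb (nid y) v); rewrite ?Hf; auto.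
Qed.

Lemma find_node_upd_same G v f x : keeps_nid f -> find_node G v = Some x ->
  find_node (upd_node G v f) v = Some (f x).
Proof.
  intros Hf H. rewrite find_node_upd, H by auto. simpl.
  apply find_node_in in H. destruct H as [_ ->]. rewrite Nat.eqb_refl. auto.
Qed.

Lemma in_canon_nodes G m w :
  In w (canon G (KNodes m)) <-> exists x, In x (gnodes G) /\ nid x = w /\ nmk x = m.
Proof.
  simpl. rewrite in_map_filter.
  split; intros [x [A [B C]]]; exists x; rewrite nmark_beq_spec in *; auto.
Qed.

Lemma in_canon_roots G w :
  In w (canon G KRoots) <-> exists x, In x (gnodes G) /\ nid x = w /\ nroot x = true.
Proof. simpl. rewrite in_map_filter. tauto. Qed.

Lemma in_canon_edges G v m o w : In w (canon G (KEdges v m o)) <->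
  exists x, In x (gedges G) /\ eid x = w /\ emk x = m /\ orient_ok o v x = true.
Proof.
  simpl. rewrite in_map_filter.
  split; intros [x [A [B C]]]; exists x; repeat split; auto.
  - apply andb_prop in C. apply emark_beq_spec. tauto.
  - apply andb_prop in C. tauto.
  - destruct C as [-> ->]. rewrite emark_beq_refl. auto.
Qed.

Lemma canon_node_find G v m : uniq_ids G -> In v (canon G (KNodes m)) ->
  exists x, find_node G v = Some x /\ nmk x = m.
Proof.
  intros HW H. apply in_canon_nodes in H. destruct H as [x [H1 [<- H3]]].
  exists x. rewrite find_node_of by auto. auto.
Qed.

Lemma no_root_in G x : canon G KRoots = [] -> In x (gnodes G) -> nroot x = false.
Proof.
  intros E Hx. destruct (nroot x) eqn:Hr; auto.
  assert (H : In (nid x) (canon G KRoots)) by (apply in_canon_roots; eauto).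
  rewrite E in H. destruct H.
Qed.

Definition count_nmark (G : graph) (m : nmark) : nat := length (canon G (KNodes m)).
Definition count_emark (G : graph) (m : emark) : nat :=
  length (filter (fun e => emark_beq (emk e) m) (gedges G)).
Definition node_label (G : graph) (v : nat) : option label := option_map nlab (find_node G v).
Definition no_edge_into (G : graph) (g : nat) : Prop := forall e, In e (gedges G) -> etgt e <> g.
Definition non_isolated (G : graph) (m : nmark) : Prop :=
  forall w, In w (canon G (KNodes m)) -> degree G w <> 0.

Lemma count_nmark_le G m : count_nmark G m <= length (gnodes G).
Proof. unfold count_nmark. simpl. rewrite length_map. apply filter_length_le. Qed.

Lemma count_emark_le G m : count_emark G m <= length (gedges G).
Proof. apply filter_length_le. Qed.

Lemma count_nmark_upd G v f x m : uniq_ids G -> find_node G v = Some x -> keeps_nid f ->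
  count_nmark (upd_node G v f) m + (if nmark_beq (nmk x) m then 1 else 0) =
  count_nmark G m + (if nmark_beq (nmk (f x)) m then 1 else 0).
Proof.
  intros [HW _] Hf Hp. unfold count_nmark. simpl. rewrite !length_map.
  apply find_node_in in Hf. destruct Hf as [H1 H2].
  apply (count_updl nid v f (fun y => nmark_beq (nmk y) m)); auto.
Qed.

Lemma count_emark_set G ed m m' : uniq_ids G -> In ed (gedges G) ->
  count_emark (upd_edge G (eid ed) (set_emark m')) m + (if emark_beq (emk ed) m then 1 else 0) =
  count_emark G m + (if emark_beq m' m then 1 else 0).
Proof.
  intros [_ HW] Hin.
  apply (count_updl eid (eid ed) (set_emark m') (fun e => emark_beq (emk e) m)); auto.
Qed.

Lemma count_emark_remark G ed m m' : uniq_ids G -> In ed (gedges G) -> emk ed = m -> m <> m' ->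
  let G1 := upd_edge G (eid ed) (set_emark m') in
  count_emark G1 m + 1 = count_emark G m /\ count_emark G1 m' = count_emark G m' + 1 /\
  forall m'', m'' <> m -> m'' <> m' -> count_emark G1 m'' = count_emark G m''.
Proof.
  intros HW Hin <- Hne G1. pose proof (fun mm => count_emark_set G ed mm m' HW Hin) as H.
  assert (Hb : forall a b, a <> b -> emark_beq a b = false)
    by (intros a b Hab; destruct (emark_beq a b) eqn:E; [apply emark_beq_spec in E|]; congruence).
  split; [|split].
  - specialize (H (emk ed)). rewrite emark_beq_refl, Hb in H by congruence. fold G1 in H. lia.
  - specialize (H m'). rewrite emark_beq_refl, Hb in H by congruence. fold G1 in H. lia.
  - intros m'' H1 H2. specialize (H m''). rewrite !Hb in H by congruence. fold G1 in H. lia.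
Qed.

Lemma red_out_edges_le G v : length (canon G (KEdges v ERed OOut)) <= count_emark G ERed.
Proof.
  cbn [canon]. rewrite length_map. unfold count_emark.
  induction (gedges G) as [|e l IH]; [reflexivity|]. cbn [filter].
  destruct (emark_beq (emk e) ERed); cbn [andb]; [destruct (orient_ok OOut v e)|]; cbn [length]; lia.
Qed.

Lemma canon_nodes_upd G v f x m : uniq_ids G -> find_node G v = Some x -> keeps_nid f ->
  nmark_beq (nmk (f x)) m = nmark_beq (nmk x) m ->
  canon (upd_node G v f) (KNodes m) = canon G (KNodes m).
Proof.
  intros HW Hf Hp H. apply (filter_updl nid v f Hp). intros y Hy Hid.
  rewrite (find_node_unique G v x y HW Hf Hy Hid). auto.
Qed.

Lemma canon_nodes_upd_sub G v f m w : keeps_nid f ->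
  In w (canon (upd_node G v f) (KNodes m)) -> w = v \/ In w (canon G (KNodes m)).
Proof.
  intros Hp H. apply in_canon_nodes in H. destruct H as [z [H1 [H2 H3]]].
  apply in_updl in H1. destruct H1 as [y [Hy E]].
  destruct (Nat.eqb_spec (nid y) v) as [E2|E2]; subst z.
  - left. rewrite Hp in H2. congruence.
  - right. apply in_canon_nodes. eauto.
Qed.

Lemma canon_roots_upd G v f : keeps_nid f -> (forall y, nroot (f y) = nroot y) ->
  canon (upd_node G v f) KRoots = canon G KRoots.
Proof. intros Hp H. apply (filter_updl nid v f Hp nroot). auto. Qed.

Lemma canon_roots_singleton G v f x : uniq_ids G -> canon G KRoots = [] ->
  find_node G v = Some x -> keeps_nid f -> nroot (f x) = true ->
  canon (upd_node G v f) KRoots = [v].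
Proof.
  intros HW Hr Hf Hp Hx. pose proof (find_node_in _ _ _ Hf) as [Hin Hid].
  assert (Hv : In v (canon (upd_node G v f) KRoots)).
  { apply in_canon_roots. exists (f x). rewrite Hp. split; auto.
    apply in_updl. exists x. rewrite Hid, Nat.eqb_refl. auto. }
  assert (Hlen : length (canon (upd_node G v f) KRoots) = 1).
  { pose proof (count_updl nid v f nroot (gnodes G) x (proj1 HW) Hin Hid) as Hc.
    rewrite Hx, (no_root_in G x Hr Hin) in Hc. apply map_eq_nil in Hr. rewrite Hr in Hc.
    cbn [canon]. rewrite length_map. change (gnodes (upd_node G v f)) with (updl nid v f (gnodes G)).
    simpl in Hc. lia. }
  destruct (canon (upd_node G v f) KRoots) as [|a [|b l]]; simpl in Hlen; try lia.
  destruct Hv as [->|[]]; auto.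
Qed.

Lemma node_label_find G v l : node_label G v = Some l -> exists x, find_node G v = Some x /\ nlab x = l.
Proof. unfold node_label. destruct (find_node G v) as [x|]; simpl; intros H; inversion H; eauto. Qed.

Lemma node_label_upd_other G v f w : keeps_nid f -> v <> w -> node_label (upd_node G v f) w = node_label G w.
Proof.
  intros Hp Hne. unfold node_label. rewrite find_node_upd by auto.
  destruct (find_node G w) as [y|] eqn:E; auto. simpl. apply find_node_in in E. destruct E as [_ ->].
  apply Nat.eqb_neq in Hne. rewrite Nat.eqb_sym, Hne. auto.
Qed.

Lemma node_label_upd_keep G v f w : keeps_nid f -> (forall y, nlab (f y) = nlab y) ->
  node_label (upd_node G v f) w = node_label G w.
Proof.
  intros Hp H. unfold node_label. rewrite find_node_upd by auto.
  destruct (find_node G w); simpl; auto. destruct (Nat.eqb (nid n) v); rewrite ?H; auto.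
Qed.

Lemma node_label_nodes G H v : gnodes G = gnodes H -> node_label G v = node_label H v.
Proof. intros E. unfold node_label, find_node. rewrite E. reflexivity. Qed.

Lemma node_label_set_lab G v l : (exists x, find_node G v = Some x) ->
  node_label (upd_node G v (set_lab l)) v = Some l.
Proof.
  intros [x H]. unfold node_label. rewrite (find_node_upd_same G v _ x); auto. intros y; reflexivity.
Qed.

Definition shape (x : node) : nat * nmark * bool := (nid x, nmk x, nroot x).
Definition node_shape (G : graph) := map shape (gnodes G).
Definition edge_shape (G : graph) := map (fun e => (eid e, esrc e, etgt e)) (gedges G).

Section ShapeDetermined.
Variables G H : graph.

Lemma canon_nodes_shape m : node_shape G = node_shape H -> canon G (KNodes m) = canon H (KNodes m).
Proof.
  assert (Hc : forall K, canon K (KNodes m) =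
    map (fun p => fst (fst p)) (filter (fun p => nmark_beq (snd (fst p)) m) (node_shape K)))
    by (intros K; unfold node_shape; rewrite filter_map_swap, map_map; reflexivity).
  intros E. rewrite !Hc, E. reflexivity.
Qed.

Lemma canon_roots_shape : node_shape G = node_shape H -> canon G KRoots = canon H KRoots.
Proof.
  assert (Hc : forall K, canon K KRoots = map (fun p => fst (fst p)) (filter snd (node_shape K)))
    by (intros K; unfold node_shape; rewrite filter_map_swap, map_map; reflexivity).
  intros E. rewrite !Hc, E. reflexivity.
Qed.

Lemma degree_shape w : edge_shape G = edge_shape H -> degree G w = degree H w.
Proof.
  assert (Hd : forall K, degree K w =
    length (filter (fun p => Nat.eqb (snd (fst p)) w || Nat.eqb (snd p) w) (edge_shape K)))
    by (intros K; unfold degree, edge_shape; rewrite filter_map_swap, length_map; reflexivity).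
  intros E. rewrite !Hd, E. reflexivity.
Qed.

Lemma length_nodes_shape : node_shape G = node_shape H -> length (gnodes G) = length (gnodes H).
Proof.
  intros E. rewrite <- (length_map shape (gnodes G)), <- (length_map shape (gnodes H)).
  exact (f_equal _ E).
Qed.

Lemma length_edges_shape : edge_shape G = edge_shape H -> length (gedges G) = length (gedges H).
Proof.
  intros E. unfold edge_shape in E.
  rewrite <- (length_map (fun e => (eid e, esrc e, etgt e)) (gedges G)), E. apply length_map.
Qed.

Lemma uniq_ids_shape : node_shape G = node_shape H -> edge_shape G = edge_shape H ->
  uniq_ids H -> uniq_ids G.
Proof.
  intros E1 E2 [A B]. split.
  - replace (map nid (gnodes G)) with (map (fun p => fst (fst p)) (node_shape G))
      by (unfold node_shape; rewrite map_map; auto).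
    rewrite E1. unfold node_shape. rewrite map_map. auto.
  - replace (map eid (gedges G)) with (map (fun p => fst (fst p)) (edge_shape G))
      by (unfold edge_shape; rewrite map_map; auto).
    rewrite E2. unfold edge_shape. rewrite map_map. auto.
Qed.

Lemma no_edge_into_shape g : edge_shape G = edge_shape H -> no_edge_into H g -> no_edge_into G g.
Proof.
  intros E HB e He.
  assert (Hin : In (eid e, esrc e, etgt e) (edge_shape H))
    by (rewrite <- E; exact (in_map (fun e => (eid e, esrc e, etgt e)) _ _ He)).
  apply in_map_iff in Hin. destruct Hin as [e' [Ee He']]. injection Ee as _ _ <-. auto.
Qed.

End ShapeDetermined.

Lemma node_shape_set_lab G w l : node_shape (upd_node G w (set_lab l)) = node_shape G.
Proof. apply map_updl. reflexivity. Qed.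

Lemma edge_shape_set_emark G e m : edge_shape (upd_edge G e (set_emark m)) = edge_shape G.
Proof. apply map_updl. reflexivity. Qed.

Lemma upd_node_upd_node G v f h : keeps_nid f ->
  upd_node (upd_node G v f) v h = upd_node G v (fun y => h (f y)).
Proof.
  intros Hf. unfold upd_node. simpl. f_equal. rewrite map_map. apply map_ext. intros y.
  destruct (Nat.eqb (nid y) v) eqn:E; [rewrite Hf, E|rewrite E]; auto.
Qed.

Lemma node_shape_upd_congr G H v f :
  (forall y z, shape y = shape z -> shape (f y) = shape (f z)) ->
  node_shape G = node_shape H -> node_shape (upd_node G v f) = node_shape (upd_node H v f).
Proof.
  intros Hf. unfold node_shape. simpl. generalize (gnodes H).
  induction (gnodes G) as [|y l IH]; intros [|z l'] E; cbn [map] in *; try discriminate; auto.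
  assert (Eyz : shape y = shape z) by congruence.
  assert (El : map shape l = map shape l') by congruence.
  assert (Hid : nid y = nid z) by (unfold shape in Eyz; congruence).
  rewrite Hid. f_equal; [|exact (IH l' El)]. destruct (Nat.eqb (nid z) v); auto.
Qed.

Lemma node_shape_upd_ext G v f h :
  (forall y, In y (gnodes G) -> nid y = v -> shape (f y) = shape (h y)) ->
  node_shape (upd_node G v f) = node_shape (upd_node G v h).
Proof.
  intros H. unfold node_shape. simpl. rewrite !map_map. apply map_ext_in. intros y Hy.
  destruct (Nat.eqb_spec (nid y) v); auto.
Qed.

Definition blue_rooted (G : graph) (v : nat) : Prop :=
  canon G KRoots = [v] /\ In v (canon G (KNodes NBlue)).

Lemma blue_rooted_shape G H v :
  node_shape G = node_shape H -> blue_rooted H v -> blue_rooted G v.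
Proof.
  intros E [Hr Hb]. split; [rewrite (canon_roots_shape G H E)|rewrite (canon_nodes_shape G H NBlue E)]; auto.
Qed.

Lemma root_node_spec G v x f : uniq_ids G -> canon G KRoots = [] -> find_node G v = Some x ->
  keeps_nid f -> nroot (f x) = true -> nmk (f x) = NBlue ->
  uniq_ids (upd_node G v f) /\ blue_rooted (upd_node G v f) v.
Proof.
  intros HW Hr Hf Hp Hroot Hb. split; [apply uniq_ids_upd_node; auto|split].
  - apply (canon_roots_singleton G v f x); auto.
  - apply in_canon_nodes. exists (f x).
    destruct (find_node_in _ _ _ (find_node_upd_same G v f x Hp Hf)). auto.
Qed.

Lemma node_shape_unroot G G' v f h m : canon G KRoots = [] -> keeps_nid f ->
  (forall y z, shape y = shape z -> shape (h y) = shape (h z)) ->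
  (forall y, shape (h (f y)) = (nid y, m, false)) ->
  node_shape G' = node_shape (upd_node G v f) ->
  node_shape (upd_node G' v h) = node_shape (upd_node G v (set_mark m)).
Proof.
  intros Hr Hp Hh Hhf E. rewrite (node_shape_upd_congr G' (upd_node G v f) v h Hh E).
  rewrite upd_node_upd_node by auto. apply node_shape_upd_ext. intros y Hy _.
  rewrite Hhf. unfold shape. simpl. rewrite (no_root_in G y Hr Hy). reflexivity.
Qed.

(** * The rules *)

Lemma gopt_some {A} (a : A) k : gopt (Some a) k = (S (fst (k a)), snd (k a)).
Proof. unfold gopt. destruct (k a); auto. Qed.

Lemma gopt_none {A} k : @gopt A None k = (1, None).
Proof. reflexivity. Qed.

Lemma guard_true k : guard true k = (S (fst k), snd k).
Proof. unfold guard. destruct k; auto. Qed.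

Lemma guard_false k : guard false k = (1, None).
Proof. reflexivity. Qed.

Ltac bound_match_cost :=
  repeat (first [ rewrite gopt_some | rewrite gopt_none | rewrite guard_true | rewrite guard_false
   | progress cbn beta iota
   | match goal with
     | |- context [gopt ?x _] => destruct x
     | |- context [guard ?b _] => destruct b
     | |- context [match ?p with (_, _) => _ end] => destruct p
     end ]);
  unfold done in *; cbn [fst snd] in *; try lia.

Lemma blue_root_spec o t G v (k : nat -> node -> res) : valid_oracle o -> uniq_ids G -> blue_rooted G v ->
  exists x, find_node G v = Some x /\
  fst (blue_root o t G k) <= 4 + fst (k v x) /\ snd (blue_root o t G k) = snd (k v x).
Proof.
  intros Ho HW [Hr Hv]. destruct (canon_node_find G v NBlue HW Hv) as [x [Hf Hb]].
  exists x. split; auto. unfold blue_root.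
  destruct (iter_singleton o t G KRoots (fun v0 => gopt (find_node G v0) (fun x0 =>
    guard (nmark_beq (nmk x0) NBlue) (k v0 x0))) Ho v Hr) as [A B].
  rewrite Hf, gopt_some, Hb, guard_true in *. cbn [fst snd] in *. split; [lia|auto].
Qed.

Definition mark_out_edge (m m' : emark) : rule := fun o t G =>
  blue_root o t G (fun v _ =>
    iter o t G (KEdges v m OOut) (fun e => gopt (find_edge G e) (fun ed =>
      guard (negb (Nat.eqb (etgt ed) v)) (done (upd_edge G e (set_emark m')))))).

Lemma mark_out_edge_spec o t G v m m' : valid_oracle o -> uniq_ids G -> blue_rooted G v ->
  fst (mark_out_edge m m' o t G) <= 8 /\
  (forall G', snd (mark_out_edge m m' o t G) = Some G' ->
     exists ed, In ed (gedges G) /\ emk ed = m /\ G' = upd_edge G (eid ed) (set_emark m')).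
Proof.
  intros Ho HW Hv. unfold mark_out_edge.
  match goal with |- context [blue_root o t G ?k] =>
    destruct (blue_root_spec o t G v k Ho HW Hv) as [x [_ [Hc ->]]] end.
  set (F := fun e => gopt (find_edge G e) (fun ed =>
      guard (negb (Nat.eqb (etgt ed) v)) (done (upd_edge G e (set_emark m'))))) in *.
  assert (HF : forall e, In e (canon G (KEdges v m OOut)) -> exists ed, In ed (gedges G) /\
     emk ed = m /\ eid ed = e /\ fst (F e) <= 3 /\ snd (F e) = Some (upd_edge G e (set_emark m'))).
  { intros e He. apply in_canon_edges in He. destruct He as [ed [Hin [<- [Hm Ho']]]].
    exists ed. cbn [orient_ok] in Ho'. apply andb_prop in Ho'. destruct Ho' as [_ Ht].
    unfold F. rewrite find_edge_of, gopt_some by auto. cbn beta. rewrite Ht, guard_true. auto. }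
  split.
  - destruct (canon G (KEdges v m OOut)) eqn:Ec.
    + rewrite iter_empty in Hc by auto. simpl in Hc. lia.
    + rewrite <- Ec in HF. destruct (iter_all_match o t G (KEdges v m OOut) F Ho 3) as [A _].
      * congruence.
      * intros e He. destruct (HF e He) as [ed [_ [_ [_ [C D]]]]]. rewrite D. split; [auto|discriminate].
      * lia.
  - intros G' HG'. apply iter_found in HG'; auto. destruct HG' as [e [He HG']].
    destruct (HF e He) as [ed [Hin [Hm [<- [_ D]]]]]. rewrite D in HG'. injection HG' as <-. eauto.
Qed.

Definition relabel_out_edge (body : graph -> Z -> edge -> Z -> node -> res) : rule := fun o t G =>
  blue_root o t G (fun v x =>
    gopt (last_int (nlab x)) (fun '(_, s) =>
    iter o t G (KEdges v ERed OOut) (fun e => gopt (find_edge G e) (fun ed =>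
      gopt (single_int (elab ed)) (fun w =>
      guard (negb (Nat.eqb (etgt ed) v)) (gopt (find_node G (etgt ed)) (fun x2 =>
        body G s ed w x2))))))).

Definition relabels_target (body : graph -> Z -> edge -> Z -> node -> res) : Prop :=
  forall G s ed w x2, fst (body G s ed w x2) <= 3 /\
    forall G', snd (body G s ed w x2) = Some G' -> exists l, G' = upd_node G (etgt ed) (set_lab l).

Lemma relabel_out_edge_spec o t G v body : valid_oracle o -> uniq_ids G -> blue_rooted G v ->
  length (canon G (KEdges v ERed OOut)) <= 1 -> relabels_target body ->
  fst (relabel_out_edge body o t G) <= 20 /\
  forall G', snd (relabel_out_edge body o t G) = Some G' ->
    exists ed l, In ed (gedges G) /\ G' = upd_node G (etgt ed) (set_lab l).
Proof.
  intros Ho HW Hv Hred Hbody. unfold relabel_out_edge.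
  match goal with |- context [blue_root o t G ?k] =>
    destruct (blue_root_spec o t G v k Ho HW Hv) as [x [_ [Hc ->]]] end.
  cbv beta in *. destruct (last_int (nlab x)) as [[y s]|]; [|simpl in *; split; [lia|discriminate]].
  rewrite gopt_some in *. cbn [fst snd] in *.
  match goal with |- context [iter o t G ?k ?F] => set (F0 := F) in * end.
  assert (HF : forall e, fst (F0 e) <= 7).
  { intros e. unfold F0. destruct (find_edge G e) as [ed|]; [|simpl; lia].
    rewrite gopt_some. destruct (single_int (elab ed)) as [w|]; [|simpl; lia].
    rewrite gopt_some. destruct (negb _); [|simpl; lia]. rewrite guard_true.
    destruct (find_node G (etgt ed)) as [x2|]; [|simpl; lia].
    rewrite gopt_some. cbn [fst]. pose proof (proj1 (Hbody G s ed w x2)). lia. }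
  pose proof (iter_cost o t G (KEdges v ERed OOut) F0 Ho 7 (fun e _ => HF e)). split; [nia|].
  intros G' HG'. apply iter_found in HG'; auto. destruct HG' as [e [_ HG']]. unfold F0 in HG'.
  destruct (find_edge G e) as [ed|] eqn:Ee; [|discriminate].
  rewrite gopt_some in HG'. destruct (single_int (elab ed)) as [w|]; [|discriminate].
  rewrite gopt_some in HG'. destruct (negb _); [|discriminate]. rewrite guard_true in HG'.
  destruct (find_node G (etgt ed)) as [x2|]; [|discriminate]. rewrite gopt_some in HG'.
  destruct (proj2 (Hbody G s ed w x2) G' HG') as [l ->].
  exists ed, l. split; auto. apply (find_edge_in G e). auto.
Qed.

Definition unvisited_body (G : graph) (s : Z) (ed : edge) (w : Z) (x2 : node) : res :=
  gopt (last_str (nlab x2) "f"%string) (fun y =>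
    done (upd_node G (etgt ed) (set_lab (y ++ [AInt (s + w)])))).

Definition reduce_body (G : graph) (s : Z) (ed : edge) (w : Z) (x2 : node) : res :=
  gopt (last_int (nlab x2)) (fun '(y, tv) =>
    guard (Z.ltb (s + w) tv) (done (upd_node G (etgt ed) (set_lab (y ++ [AInt (s + w)]))))).

Lemma relabels_target_unvisited : relabels_target unvisited_body.
Proof.
  intros G s ed w x2. unfold unvisited_body.
  destruct (last_str (nlab x2) "f"); simpl; split; try lia; try discriminate.
  intros G' E. injection E as <-. eauto.
Qed.

Lemma relabels_target_reduce : relabels_target reduce_body.
Proof.
  intros G s ed w x2. unfold reduce_body.
  destruct (last_int (nlab x2)) as [[y tv]|]; simpl; [|split; [lia|discriminate]].
  destruct (Z.ltb (s + w) tv); simpl; split; try lia; try discriminate.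
  intros G' E. injection E as <-. eauto.
Qed.

Definition at_blue_root (f : node -> node) : rule := fun o t G =>
  blue_root o t G (fun v _ => done (upd_node G v f)).

Lemma at_blue_root_spec o t G v f : valid_oracle o -> uniq_ids G -> blue_rooted G v ->
  fst (at_blue_root f o t G) <= 5 /\ snd (at_blue_root f o t G) = Some (upd_node G v f).
Proof.
  intros Ho HW Hv. unfold at_blue_root.
  match goal with |- context [blue_root o t G ?k] =>
    destruct (blue_root_spec o t G v k Ho HW Hv) as [x [_ [Hc ->]]] end.
  simpl in *. split; [lia|auto].
Qed.

Lemma no_deg_spec o t G v : valid_oracle o -> uniq_ids G -> blue_rooted G v ->
  fst (r_no_deg o t G) <= 6 /\
  snd (r_no_deg o t G) = if Nat.eqb (degree G v) 0
    then Some (upd_node G v (fun y => set_root false (set_mark NUn y))) else None.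
Proof.
  intros Ho HW Hv. unfold r_no_deg.
  match goal with |- context [blue_root o t G ?k] =>
    destruct (blue_root_spec o t G v k Ho HW Hv) as [x [_ [Hc ->]]] end.
  destruct (Nat.eqb (degree G v) 0); simpl in *; split; auto; lia.
Qed.

Section CounterRules.
Variables (o : oracle) (t : nat) (G : graph) (g : nat).
Hypothesis Ho : valid_oracle o.
Hypothesis Hg : canon G (KNodes NGreen) = [g].

Lemma decrement_spec k : node_label G g = Some [AInt k] ->
  fst (r_decrement o t G) <= 6 /\
  snd (r_decrement o t G) = if Z.ltb 0 k then Some (upd_node G g (set_lab [AInt (k - 1)])) else None.
Proof.
  intros Hl. destruct (node_label_find G g _ Hl) as [xg [Hf Hlx]]. unfold r_decrement.
  match goal with |- context [iter o t G ?k ?F] =>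
    destruct (iter_singleton o t G k F Ho g Hg) as [A ->] end.
  revert A. rewrite Hf, gopt_some. cbv beta. rewrite Hlx. simpl single_int. rewrite gopt_some.
  destruct (Z.ltb 0 k); simpl; split; auto; lia.
Qed.

Lemma set_flag_spec : fst (r_set_flag o t G) <= 6 /\
  (snd (r_set_flag o t G) = None \/ snd (r_set_flag o t G) = Some (upd_node G g (set_lab [AInt (-1)]))).
Proof.
  unfold r_set_flag.
  match goal with |- context [iter o t G ?k ?F] =>
    destruct (iter_singleton o t G k F Ho g Hg) as [A ->] end.
  split; [revert A; bound_match_cost|].
  destruct (find_node G g) as [x|]; [rewrite gopt_some|auto]. cbv beta.
  destruct (single_int (nlab x)); [rewrite gopt_some|]; auto.
Qed.

Lemma flag_cost : fst (r_flag o t G) <= 7.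
Proof.
  unfold r_flag.
  match goal with |- context [iter o t G ?k ?F] =>
    destruct (iter_singleton o t G k F Ho g Hg) as [A _] end.
  revert A. bound_match_cost.
Qed.

Lemma delete_counter_spec : uniq_ids G ->
  fst (r_delete_counter o t G) <= 3 + 5 * length (gedges G) /\
  forall G', snd (r_delete_counter o t G) = Some G' ->
    uniq_ids G' /\ length (gnodes G') <= length (gnodes G).
Proof.
  intros HW. unfold r_delete_counter.
  match goal with |- context [iter o t G (KNodes NGreen) ?F] =>
    destruct (iter_singleton o t G (KNodes NGreen) F Ho g Hg) as [A ->] end.
  match goal with A : context [iter o t G (KEdges g EDashed OOut) ?F] |- _ => set (F0 := F) in * end.
  assert (Hc : forall e, fst (F0 e) <= 4) by (intros e; unfold F0; bound_match_cost).
  pose proof (iter_cost o t G (KEdges g EDashed OOut) F0 Ho 4 (fun e _ => Hc e)).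
  assert (length (canon G (KEdges g EDashed OOut)) <= length (gedges G))
    by (simpl; rewrite length_map; apply filter_length_le).
  split; [nia|].
  intros G' HG'. apply iter_found in HG'; auto. destruct HG' as [e [_ HG']]. unfold F0 in HG'.
  destruct (find_edge G e) as [ed|]; [|discriminate]. rewrite gopt_some in HG'.
  destruct (negb (Nat.eqb (etgt ed) g)); [|discriminate]. rewrite guard_true in HG'.
  destruct (Nat.eqb (degree G g) 1); [|discriminate]. rewrite guard_true in HG'.
  injection HG' as <-. split.
  - apply uniq_ids_upd_node; [intros y; reflexivity|].
    destruct HW as [HWn HWe]. split; apply NoDup_map_filter; auto.
  - simpl. rewrite length_map. apply filter_length_le.
Qed.

End CounterRules.

Definition blue_unvisited (y : node) : node :=
  mkNode (nid y) (nlab y ++ [AStr "f"%string]) NBlue (nroot y).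

Lemma count_spec o t G g k : valid_oracle o -> uniq_ids G -> canon G (KNodes NGreen) = [g] ->
  node_label G g = Some [AInt k] ->
  (canon G (KNodes NGrey) = [] -> r_count o t G = (1, None)) /\
  (canon G (KNodes NGrey) <> [] -> fst (r_count o t G) <= 8 /\
     exists v, In v (canon G (KNodes NGrey)) /\
     snd (r_count o t G) = Some (upd_node (upd_node G v blue_unvisited) g (set_lab [AInt (k + 1)]))).
Proof.
  intros Ho HW Hg Hl. destruct (node_label_find G g _ Hl) as [xg [Hf Hlx]].
  split; [intros E; apply iter_empty; auto|intros Hne].
  unfold r_count. match goal with |- context [iter o t G (KNodes NGrey) ?F0] => set (F := F0) end.
  assert (HF : forall v, In v (canon G (KNodes NGrey)) -> fst (F v) <= 7 /\
     snd (F v) = Some (upd_node (upd_node G v blue_unvisited) g (set_lab [AInt (k + 1)]))).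
  { intros v Hv. destruct (canon_node_find G v NGrey HW Hv) as [x1 [Hf1 Hx1]].
    assert (Hvg : Nat.eqb v g = false).
    { apply Nat.eqb_neq. intros ->.
      destruct (canon_node_find G g NGreen HW) as [xg' [Hfg Hgm]]; [rewrite Hg; now left|congruence]. }
    unfold F. rewrite Hf1, gopt_some. cbv beta.
    match goal with |- context [iter o t G (KNodes NGreen) ?F'] =>
      destruct (iter_singleton o t G (KNodes NGreen) F' Ho g Hg) as [A B] end.
    cbv beta in A, B. rewrite Hvg in A, B. simpl negb in A, B. rewrite guard_true, Hf, gopt_some in A, B.
    cbv beta in A, B. rewrite Hlx in A, B. simpl in A, B. rewrite B. cbn [fst snd].
    split; [lia|reflexivity]. }
  destruct (iter_all_match o t G (KNodes NGrey) F Ho 7 Hne) as [A B].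
  { intros v Hv. destruct (HF v Hv) as [C ->]. split; [auto|discriminate]. }
  split; [auto|].
  destruct (snd (iter o t G (KNodes NGrey) F)) as [G'|] eqn:ES; [|congruence].
  apply iter_found in ES; auto. destruct ES as [v [Hv ES]].
  exists v. split; auto. rewrite (proj2 (HF v Hv)) in ES. congruence.
Qed.

Lemma runs_mark_out_edge o m m' t G v : valid_oracle o -> uniq_ids G -> blue_rooted G v ->
  runs o (R (mark_out_edge m m')) t G (fun r t1 => t1 <= t + 8 /\ forall G1, r = Some G1 ->
    exists ed, In ed (gedges G) /\ emk ed = m /\ G1 = upd_edge G (eid ed) (set_emark m')).
Proof.
  intros Ho HW Hv. apply runs_rule.
  destruct (mark_out_edge_spec o t G v m m' Ho HW Hv) as [A B]. split; [lia|exact B].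
Qed.

Definition unroot_grey (y : node) : node := set_root false (set_mark NGrey y).

Lemma unroot_grey_spec o t G v : valid_oracle o -> uniq_ids G -> blue_rooted G v ->
  fst (r_unroot1 o t G) <= 5 /\ snd (r_unroot1 o t G) = Some (upd_node G v unroot_grey).
Proof. apply at_blue_root_spec. Qed.

(** * Visiting a blue node *)

Definition edge_loop (step : cmd) : cmd :=
  Loop (Seq (R r_unmarked_edge) (Seq step (R r_finish))).

Section EdgeLoop.
Variables (o : oracle) (step : cmd) (c v : nat) (X : graph -> Prop) (G0 : graph).
Hypothesis Ho : valid_oracle o.
Hypothesis X_emark : forall G e m, X G -> X (upd_edge G e (set_emark m)).
Hypothesis step_spec : forall G t,
  uniq_ids G -> blue_rooted G v -> node_shape G = node_shape G0 -> edge_shape G = edge_shape G0 ->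
  length (canon G (KEdges v ERed OOut)) <= 1 -> X G ->
  runs o step t G (fun r t' => t' <= t + c /\ forall G', r = Some G' ->
    node_shape G' = node_shape G /\ gedges G' = gedges G /\ X G').
Hypotheses (HW0 : uniq_ids G0) (Hv0 : blue_rooted G0 v).

Definition edge_loop_inv (G : graph) : Prop :=
  node_shape G = node_shape G0 /\ edge_shape G = edge_shape G0 /\ count_emark G ERed = 0 /\ X G.

Lemma edge_loop_round G t : edge_loop_inv G ->
  runs o (Seq (R r_unmarked_edge) (Seq step (R r_finish))) t G (fun r t1 => match r with
    | Some G1 => edge_loop_inv G1 /\
        t1 + (c + 20) * count_emark G1 EUn + 1 <= t + (c + 20) * count_emark G EUn
    | None => t1 <= t + (c + 20) /\ True end).
Proof.
  intros [HN [HE [Hred HX]]].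
  assert (HW : uniq_ids G) by (apply (uniq_ids_shape G G0); auto).
  assert (Hv : blue_rooted G v) by (apply (blue_rooted_shape G G0); auto).
  apply runs_seq with (Q1 := fun r t1 => t1 <= t + 8 /\ forall G1, r = Some G1 ->
    exists ed, In ed (gedges G) /\ emk ed = EUn /\ G1 = upd_edge G (eid ed) (set_emark ERed)).
  { exact (runs_mark_out_edge o EUn ERed t G v Ho HW Hv). }
  2:{ intros t1 [Ht1 _]. lia. }
  intros G1' t1 [Ht1 HG1]. destruct (HG1 G1' eq_refl) as [ed [Hin [Hm ->]]]. clear HG1.
  destruct (count_emark_remark G ed EUn ERed HW Hin Hm ltac:(discriminate)) as [Hun1 [Hred1 _]].
  set (G1 := upd_edge G (eid ed) (set_emark ERed)) in *.
  assert (HES1 : edge_shape G1 = edge_shape G0) by (unfold G1; rewrite edge_shape_set_emark; auto).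
  apply runs_seq with (Q1 := fun r t2 => t2 <= t1 + c /\ forall G2, r = Some G2 ->
    node_shape G2 = node_shape G1 /\ gedges G2 = gedges G1 /\ X G2).
  { apply step_spec; [apply uniq_ids_upd_edge; auto|exact Hv|exact HN|exact HES1| |apply X_emark; auto].
    pose proof (red_out_edges_le G1 v). lia. }
  2:{ intros t2 [Ht2 _]. lia. }
  intros G2 t2 [Ht2 HG2]. destruct (HG2 G2 eq_refl) as [HN2 [HE2 HX2]]. clear HG2.
  assert (HC2 : forall m, count_emark G2 m = count_emark G1 m)
    by (intros m; unfold count_emark; rewrite HE2; auto).
  assert (HES2 : edge_shape G2 = edge_shape G0) by (unfold edge_shape; rewrite HE2; exact HES1).
  assert (HN2' : node_shape G2 = node_shape G0) by (rewrite HN2; exact HN).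
  assert (HW2 : uniq_ids G2) by (apply (uniq_ids_shape G2 G0); auto).
  assert (Hv2 : blue_rooted G2 v) by (apply (blue_rooted_shape G2 G0); auto).
  eapply runs_weaken; [exact (runs_mark_out_edge o ERed EBlue t2 G2 v Ho HW2 Hv2)|].
  intros [G3|] t3 [Ht3 HG3]; [|split; [lia|auto]].
  destruct (HG3 G3 eq_refl) as [ed' [Hin' [Hm' ->]]].
  destruct (count_emark_remark G2 ed' ERed EBlue HW2 Hin' Hm' ltac:(discriminate))
    as [Hred3 [_ Hother]].
  split; [split; [|split; [|split]]|].
  - exact HN2'.
  - rewrite edge_shape_set_emark. exact HES2.
  - rewrite HC2 in Hred3. lia.
  - apply X_emark. exact HX2.
  - rewrite (Hother EUn) by discriminate. rewrite HC2. nia.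
Qed.

Lemma edge_loop_spec t : count_emark G0 ERed = 0 -> X G0 ->
  runs o (edge_loop step) t G0 (fun r t' => exists G', r = Some G' /\ edge_loop_inv G' /\
    t' + (c + 20) * count_emark G' EUn <= t + (c + 20) * count_emark G0 EUn + 2 * (c + 20)).
Proof.
  intros Hred HX. eapply runs_weaken.
  - apply (runs_loop o _ edge_loop_inv (fun _ => True) (fun G => (c + 20) * count_emark G EUn) (c + 20)).
    + exact edge_loop_round.
    + repeat split; auto.
  - intros r t' [G' [-> [HI [_ Ht]]]]. eauto.
Qed.

End EdgeLoop.

Section Visit.
Variables (o : oracle) (step : cmd) (c : nat) (X : graph -> Prop) (G : graph) (v : nat).
Let G1 := upd_node G v (set_root true).
Hypothesis Ho : valid_oracle o.
Hypothesis X_emark : forall H e m, X H -> X (upd_edge H e (set_emark m)).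
Hypothesis X_unroot : forall H, X H -> X (upd_node H v unroot_grey).
Hypothesis step_spec : forall H t,
  uniq_ids H -> blue_rooted H v -> node_shape H = node_shape G1 -> edge_shape H = edge_shape G1 ->
  length (canon H (KEdges v ERed OOut)) <= 1 -> X H ->
  runs o step t H (fun r t' => t' <= t + c /\ forall H', r = Some H' ->
    node_shape H' = node_shape H /\ gedges H' = gedges H /\ X H').
Hypotheses (HW : uniq_ids G) (Hr : canon G KRoots = []) (Hv : In v (canon G (KNodes NBlue))).

Lemma visit_spec t : count_emark G ERed = 0 -> X G1 ->
  runs o (Seq (edge_loop step) (R r_unroot1)) t G1 (fun r t' => exists G', r = Some G' /\
    node_shape G' = node_shape (upd_node G v (set_mark NGrey)) /\ edge_shape G' = edge_shape G /\
    count_emark G' ERed = 0 /\ X G' /\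
    t' + (c + 20) * count_emark G' EUn <= t + (c + 20) * count_emark G EUn + 2 * (c + 20) + 5).
Proof.
  intros Hred HX. destruct (canon_node_find G v NBlue HW Hv) as [x [Hf Hb]].
  destruct (root_node_spec G v x (set_root true) HW Hr Hf (fun _ => eq_refl) eq_refl Hb) as [HW1 Hv1].
  apply runs_seq with (Q1 := fun r t1 => exists H, r = Some H /\ edge_loop_inv X G1 H /\
    t1 + (c + 20) * count_emark H EUn <= t + (c + 20) * count_emark G1 EUn + 2 * (c + 20)).
  { apply (edge_loop_spec o step c v X G1); auto. }
  2:{ intros t1 [H [E _]]. discriminate. }
  intros H' t1 [H [E [[HN [HE [Hred' HX']]] Ht1]]]. injection E as ->.
  assert (HWH : uniq_ids H) by (apply (uniq_ids_shape H G1); auto).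
  assert (HvH : blue_rooted H v) by (apply (blue_rooted_shape H G1); auto).
  apply runs_rule. destruct (unroot_grey_spec o t1 H v Ho HWH HvH) as [A B]. rewrite B.
  exists (upd_node H v unroot_grey). split; [reflexivity|]. split; [|split; [|split; [|split]]].
  - apply (node_shape_unroot G H v (set_root true) unroot_grey NGrey Hr (fun _ => eq_refl)).
    + intros y z E. unfold shape in *. simpl. congruence.
    + reflexivity.
    + exact HN.
  - exact HE.
  - exact Hred'.
  - apply X_unroot. exact HX'.
  - change (count_emark G1 EUn) with (count_emark G EUn) in Ht1.
    change (count_emark (upd_node H v unroot_grey) EUn) with (count_emark H EUn). lia.
Qed.

End Visit.

(** * The phases of bellman-ford *)

Record counter_graph (g NE NN : nat) (G : graph) : Prop := {
  cg_ids : uniq_ids G;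
  cg_green : canon G (KNodes NGreen) = [g];
  cg_no_root : canon G KRoots = [];
  cg_no_red : count_emark G ERed = 0;
  cg_no_in : no_edge_into G g;
  cg_edges : length (gedges G) = NE;
  cg_nodes : length (gnodes G) = NN }.

Lemma counter_graph_shape g NE NN G H :
  node_shape G = node_shape H -> edge_shape G = edge_shape H -> count_emark G ERed = 0 ->
  counter_graph g NE NN H -> counter_graph g NE NN G.
Proof.
  intros EN EE Hred [HW Hg Hr _ Hin HE HN]. split; auto.
  - apply (uniq_ids_shape G H); auto.
  - rewrite (canon_nodes_shape G H); auto.
  - rewrite (canon_roots_shape G H); auto.
  - apply (no_edge_into_shape G H); auto.
  - rewrite (length_edges_shape G H); auto.
  - rewrite (length_nodes_shape G H); auto.
Qed.

Lemma counter_graph_recolour g NE NN G v x m : counter_graph g NE NN G ->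
  find_node G v = Some x -> nmk x <> NGreen -> m <> NGreen ->
  counter_graph g NE NN (upd_node G v (set_mark m)).
Proof.
  intros [HW Hg Hr Hred Hin HE HN] Hf Hx Hm. split; auto.
  - apply uniq_ids_upd_node; auto. intros y; reflexivity.
  - rewrite (canon_nodes_upd G v _ x); auto; [intros y; reflexivity|].
    simpl. destruct m, (nmk x); simpl; congruence.
  - rewrite canon_roots_upd; auto; intros y; reflexivity.
  - simpl. rewrite length_map. auto.
Qed.

Lemma count_nmark_recolour G v x m m' : uniq_ids G -> find_node G v = Some x ->
  count_nmark (upd_node G v (set_mark m)) m' + (if nmark_beq (nmk x) m' then 1 else 0) =
  count_nmark G m' + (if nmark_beq m m' then 1 else 0).
Proof. intros HW Hf. apply count_nmark_upd; auto. intros y; reflexivity. Qed.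

Lemma non_isolated_recolour G v m m' : non_isolated G m' -> degree G v <> 0 ->
  non_isolated (upd_node G v (set_mark m)) m'.
Proof.
  intros H Hv w Hw. apply canon_nodes_upd_sub in Hw; [|intros y; reflexivity].
  destruct Hw as [->|Hw]; [exact Hv|exact (H w Hw)].
Qed.

Lemma non_isolated_shape G H m : node_shape G = node_shape H -> edge_shape G = edge_shape H ->
  non_isolated H m -> non_isolated G m.
Proof.
  intros EN EE HP w Hw. rewrite (degree_shape G H w EE). apply HP.
  rewrite <- (canon_nodes_shape G H m EN). exact Hw.
Qed.

Definition relax_step : cmd := TryTE (Call [r_unvisited; r_reduce]) Skip Skip.

Lemma relax_step_spec o g lg v G t : valid_oracle o -> uniq_ids G -> blue_rooted G v ->
  length (canon G (KEdges v ERed OOut)) <= 1 -> no_edge_into G g -> node_label G g = Some lg ->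
  runs o relax_step t G (fun r t' => t' <= t + 80 /\ forall G', r = Some G' ->
    node_shape G' = node_shape G /\ gedges G' = gedges G /\ node_label G' g = Some lg).
Proof.
  intros Ho HW Hv Hred Hin Hl.
  assert (Hrelabel : forall ed l, In ed (gedges G) ->
    node_label (upd_node G (etgt ed) (set_lab l)) g = Some lg).
  { intros ed l Hed. rewrite node_label_upd_other; auto. intros y; reflexivity. }
  apply runs_try with (Q1 := fun r t1 => t1 <= t + 40 /\ forall G1, r = Some G1 ->
    exists ed l, In ed (gedges G) /\ G1 = upd_node G (etgt ed) (set_lab l)).
  - apply runs_call. simpl.
    change r_unvisited with (relabel_out_edge unvisited_body).
    change r_reduce with (relabel_out_edge reduce_body).
    destruct (relabel_out_edge_spec o t G v unvisited_body Ho HW Hv Hred relabels_target_unvisited)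
      as [A1 B1].
    destruct (relabel_out_edge unvisited_body o t G) as [c1 [G1|]]; simpl in *.
    + split; [lia|]. intros G1' E. injection E as <-. auto.
    + destruct (relabel_out_edge_spec o (t + c1) G v reduce_body Ho HW Hv Hred relabels_target_reduce)
        as [A2 B2].
      destruct (relabel_out_edge reduce_body o (t + c1) G) as [c2 [G2|]]; simpl in *.
      * split; [lia|]. intros G2' E. injection E as <-. auto.
      * split; [lia|discriminate].
  - intros G1 t1 [Ht1 HG1]. destruct (HG1 G1 eq_refl) as [ed [l [Hed ->]]].
    apply runs_skip. split; [lia|]. intros G' E. injection E as <-.
    split; [apply node_shape_set_lab|split; auto].
  - intros t1 [Ht1 _]. apply runs_skip. split; [lia|]. intros G' E. injection E as <-. auto.
Qed.

Record relax_inv (g : nat) (lg : label) (B NE NN : nat) (G : graph) : Prop := {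
  ri_counter : counter_graph g NE NN G;
  ri_label : node_label G g = Some lg;
  ri_grey : non_isolated G NGrey;
  ri_bound : count_nmark G NBlue + count_nmark G NGrey <= B }.

Lemma relax_inv_recolour g lg B NE NN G G' v m : relax_inv g lg B NE NN G ->
  In v (canon G (KNodes NBlue)) -> (m = NGrey /\ degree G v <> 0) \/ m = NUn ->
  node_shape G' = node_shape (upd_node G v (set_mark m)) -> edge_shape G' = edge_shape G ->
  count_emark G' ERed = 0 -> node_label G' g = Some lg ->
  relax_inv g lg B NE NN G' /\ count_nmark G' NBlue + 1 = count_nmark G NBlue.
Proof.
  intros [HC HL HP HB] Hv Hm EN EE Hred' HL'. set (Gm := upd_node G v (set_mark m)) in *.
  destruct (canon_node_find G v NBlue (cg_ids _ _ _ _ HC) Hv) as [x [Hf Hx]].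
  assert (Hcount : forall m', count_nmark G' m' = count_nmark Gm m')
    by (intros m'; unfold count_nmark; rewrite (canon_nodes_shape G' Gm); auto).
  pose proof (count_nmark_recolour G v x m NBlue (cg_ids _ _ _ _ HC) Hf) as Hb.
  pose proof (count_nmark_recolour G v x m NGrey (cg_ids _ _ _ _ HC) Hf) as Hgr.
  fold Gm in Hb, Hgr. rewrite Hx in Hb, Hgr. rewrite <- !Hcount in Hb, Hgr.
  assert (HmB : m <> NBlue) by (destruct Hm as [[-> _]| ->]; discriminate).
  assert (HmG : m <> NGreen) by (destruct Hm as [[-> _]| ->]; discriminate).
  assert (HPm : non_isolated Gm NGrey).
  { destruct Hm as [[-> Hd]| ->]; [apply non_isolated_recolour; auto|].
    intros w Hw. unfold Gm in Hw.
    rewrite (canon_nodes_upd G v (set_mark NUn) x NGrey (cg_ids _ _ _ _ HC) Hf (fun _ => eq_refl)) in Hw;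
      [exact (HP w Hw)|rewrite Hx; reflexivity]. }
  split; [split|].
  - apply (counter_graph_shape g NE NN G' Gm); auto.
    apply (counter_graph_recolour g NE NN G v x m); auto. rewrite Hx. discriminate.
  - exact HL'.
  - apply (non_isolated_shape G' Gm); auto.
  - destruct m; simpl in Hb, Hgr; try congruence; lia.
  - destruct m; simpl in Hb; try congruence; lia.
Qed.

(* A visit costs less than 230 on top of its successful edge rounds, which cost at most 100. *)
Definition relax_potential (G : graph) : nat :=
  230 * count_nmark G NBlue + 100 * count_emark G EUn.

Lemma r_root1_pick o t G : valid_oracle o ->
  (canon G (KNodes NBlue) = [] /\ r_root1 o t G = (1, None)) \/
  (exists v, In v (canon G (KNodes NBlue)) /\ r_root1 o t G = (2, Some (upd_node G v (set_root true)))).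
Proof. intros Ho. exact (iter_pick o t G (KNodes NBlue) (fun v => upd_node G v (set_root true)) Ho). Qed.

Lemma relax_round o g lg B NE NN G t : valid_oracle o -> relax_inv g lg B NE NN G ->
  runs o Relax t G (fun r t1 => match r with
    | Some G1 => relax_inv g lg B NE NN G1 /\ t1 + relax_potential G1 + 1 <= t + relax_potential G
    | None => t1 <= t + 1 /\ canon G (KNodes NBlue) = [] end).
Proof.
  intros Ho HI. destruct (ri_counter _ _ _ _ _ _ HI) as [HW _ Hr Hred Hin _ _].
  apply runs_seq with (Q1 := fun r t1 => (r = None /\ t1 = t + 1 /\ canon G (KNodes NBlue) = []) \/
    exists v, In v (canon G (KNodes NBlue)) /\ r = Some (upd_node G v (set_root true)) /\ t1 = t + 2).
  { apply runs_rule. destruct (r_root1_pick o t G Ho) as [[E ->]|[v [Hv ->]]]; simpl; eauto. }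
  2:{ intros t1 [[_ [-> E]]|[v [_ [E _]]]]; [split; [lia|auto]|discriminate]. }
  intros G1' t1 [[E _]|[v [Hv [E ->]]]]; [discriminate|]. injection E as ->.
  destruct (canon_node_find G v NBlue HW Hv) as [x [Hf Hx]].
  set (G1 := upd_node G v (set_root true)).
  destruct (root_node_spec G v x (set_root true) HW Hr Hf (fun _ => eq_refl) eq_refl Hx) as [HW1 Hv1].
  assert (HL1 : node_label G1 g = Some lg)
    by (unfold G1; rewrite node_label_upd_keep; [apply HI|..]; intros y; reflexivity).
  apply runs_try with (Q1 := fun r t2 => t2 <= t + 8 /\ r = if Nat.eqb (degree G v) 0
      then Some (upd_node G1 v (fun y => set_root false (set_mark NUn y))) else None).
  { apply runs_rule. destruct (no_deg_spec o (t + 2) G1 v Ho HW1 Hv1) as [A ->]. split; [lia|reflexivity]. }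
  - intros G2 t2 [Ht2 E]. destruct (Nat.eqb_spec (degree G v) 0) as [Hd|Hd]; [|discriminate].
    injection E as ->. apply runs_skip.
    assert (EN : node_shape (upd_node G1 v (fun y => set_root false (set_mark NUn y))) =
                 node_shape (upd_node G v (set_mark NUn))).
    { apply (node_shape_unroot G G1 v (set_root true) _ NUn Hr (fun _ => eq_refl)); [|reflexivity..].
      intros y z E. unfold shape in *. simpl. congruence. }
    assert (HL2 : node_label (upd_node G1 v (fun y => set_root false (set_mark NUn y))) g = Some lg)
      by (rewrite node_label_upd_keep; [exact HL1|..]; intros y; reflexivity).
    destruct (relax_inv_recolour g lg B NE NN G _ v NUn HI Hv (or_intror eq_refl) EN eq_refl Hred HL2)
      as [HI2 Hb2].
    split; [exact HI2|]. unfold relax_potential. change (count_emark _ EUn) with (count_emark G EUn). lia.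
  - intros t2 [Ht2 E]. destruct (Nat.eqb_spec (degree G v) 0) as [Hd|Hd]; [discriminate|].
    eapply runs_weaken.
    + apply (visit_spec o relax_step 80 (fun H => node_label H g = Some lg) G v Ho); auto.
      * intros H HX. rewrite node_label_upd_keep; [exact HX|..]; intros y; reflexivity.
      * intros H t' HWH HvH EN EE Hl HX. apply (relax_step_spec o g lg v); auto.
        apply (no_edge_into_shape H G); auto.
    + intros r t' [G3 [-> [EN [EE [Hred3 [HL3 Ht3]]]]]].
      destruct (relax_inv_recolour g lg B NE NN G G3 v NGrey HI Hv (or_introl (conj eq_refl Hd))
        EN EE Hred3 HL3) as [HI3 Hb3].
      split; [exact HI3|]. unfold relax_potential. lia.
Qed.

Lemma relax_loop_spec o g lg B NE NN G t : valid_oracle o -> relax_inv g lg B NE NN G ->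
  runs o (Loop Relax) t G (fun r t' => exists G', r = Some G' /\ relax_inv g lg B NE NN G' /\
    canon G' (KNodes NBlue) = [] /\ t' + relax_potential G' <= t + relax_potential G + 2).
Proof.
  intros Ho HI. eapply runs_weaken.
  - apply (runs_loop o Relax (relax_inv g lg B NE NN) (fun H => canon H (KNodes NBlue) = [])
      relax_potential 1); [|exact HI].
    intros H t' HH. apply relax_round; auto.
  - intros r t' [G' [-> HG']]. eauto.
Qed.

Record clean_inv (g : nat) (lg : label) (NE NN : nat) (G : graph) : Prop := {
  ci_counter : counter_graph g NE NN G;
  ci_label : node_label G g = Some lg;
  ci_grey : non_isolated G NGrey;
  ci_blue : non_isolated G NBlue }.

Lemma clean_inv_recolour g lg NE NN G G' v : clean_inv g lg NE NN G ->
  In v (canon G (KNodes NGrey)) ->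
  node_shape G' = node_shape (upd_node G v (set_mark NBlue)) -> edge_shape G' = edge_shape G ->
  count_emark G' ERed = 0 -> node_label G' g = Some lg ->
  clean_inv g lg NE NN G' /\ count_nmark G' NGrey + 1 = count_nmark G NGrey.
Proof.
  intros [HC HL HPg HPb] Hv EN EE Hred' HL'. set (Gm := upd_node G v (set_mark NBlue)) in *.
  destruct (canon_node_find G v NGrey (cg_ids _ _ _ _ HC) Hv) as [x [Hf Hx]].
  pose proof (count_nmark_recolour G v x NBlue NGrey (cg_ids _ _ _ _ HC) Hf) as Hgr.
  fold Gm in Hgr. rewrite Hx in Hgr. simpl in Hgr.
  assert (Hd : degree G v <> 0) by (apply HPg; auto).
  split; [split|].
  - apply (counter_graph_shape g NE NN G' Gm); auto.
    apply (counter_graph_recolour g NE NN G v x NBlue); auto; [rewrite Hx|]; discriminate.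
  - exact HL'.
  - apply (non_isolated_shape G' Gm); auto. apply non_isolated_recolour; auto.
  - apply (non_isolated_shape G' Gm); auto. apply non_isolated_recolour; auto.
  - unfold count_nmark in *. rewrite (canon_nodes_shape G' Gm); auto. lia.
Qed.

Lemma unmark_loop_spec o v G1 t : valid_oracle o -> uniq_ids G1 -> blue_rooted G1 v ->
  count_emark G1 ERed = 0 ->
  runs o (Loop (R r_unmark_edge)) t G1 (fun r t' => exists G', r = Some G' /\
    gnodes G' = gnodes G1 /\ edge_shape G' = edge_shape G1 /\ count_emark G' ERed = 0 /\
    t' + 9 * count_emark G' EBlue <= t + 9 * count_emark G1 EBlue + 16).
Proof.
  intros Ho HW1 Hv1 Hred1.
  set (Inv := fun G => gnodes G = gnodes G1 /\ edge_shape G = edge_shape G1 /\ count_emark G ERed = 0).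
  eapply runs_weaken.
  - apply (runs_loop o _ Inv (fun _ => True) (fun G => 9 * count_emark G EBlue) 8); [|repeat split; auto].
    intros G t' [Hn [HE Hred]].
    assert (HN : node_shape G = node_shape G1) by (unfold node_shape; rewrite Hn; auto).
    assert (HW : uniq_ids G) by (apply (uniq_ids_shape G G1); auto).
    assert (Hv : blue_rooted G v) by (apply (blue_rooted_shape G G1); auto).
    eapply runs_weaken; [exact (runs_mark_out_edge o EBlue EUn t' G v Ho HW Hv)|].
    intros [G2|] t2 [Ht2 HG2]; [|split; [lia|auto]].
    destruct (HG2 G2 eq_refl) as [ed [Hin [Hm ->]]].
    destruct (count_emark_remark G ed EBlue EUn HW Hin Hm ltac:(discriminate)) as [Hb2 [_ Hother]].
    split; [split; [|split]|].
    + exact Hn.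
    + rewrite edge_shape_set_emark. exact HE.
    + rewrite (Hother ERed) by discriminate. exact Hred.
    + lia.
  - intros r t' [G' [-> [[Hn [HE Hred]] [_ Ht]]]]. exists G'. auto.
Qed.

Definition root_blue (y : node) : node := set_root true (set_mark NBlue y).

Lemma r_root2_pick o t G : valid_oracle o ->
  (canon G (KNodes NGrey) = [] /\ r_root2 o t G = (1, None)) \/
  (exists v, In v (canon G (KNodes NGrey)) /\ r_root2 o t G = (2, Some (upd_node G v root_blue))).
Proof. intros Ho. exact (iter_pick o t G (KNodes NGrey) (fun v => upd_node G v root_blue) Ho). Qed.

Definition clean_potential (G : graph) : nat := 30 * count_nmark G NGrey + 9 * count_emark G EBlue.

Lemma clean_round o g lg NE NN G t : valid_oracle o -> clean_inv g lg NE NN G ->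
  runs o Clean t G (fun r t1 => match r with
    | Some G1 => clean_inv g lg NE NN G1 /\ t1 + clean_potential G1 + 1 <= t + clean_potential G
    | None => t1 <= t + 1 /\ True end).
Proof.
  intros Ho HI. destruct (ci_counter _ _ _ _ _ HI) as [HW _ Hr Hred _ _ _].
  apply runs_seq with (Q1 := fun r t1 => (r = None /\ t1 = t + 1) \/
    exists v, In v (canon G (KNodes NGrey)) /\ r = Some (upd_node G v root_blue) /\ t1 = t + 2).
  { apply runs_rule. destruct (r_root2_pick o t G Ho) as [[E ->]|[v [Hv ->]]]; simpl; eauto. }
  2:{ intros t1 [[_ ->]|[v [_ [E _]]]]; [split; [lia|auto]|discriminate]. }
  intros G1' t1 [[E _]|[v [Hv [E ->]]]]; [discriminate|]. injection E as ->.
  destruct (canon_node_find G v NGrey HW Hv) as [x [Hf Hx]].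
  set (G1 := upd_node G v root_blue).
  destruct (root_node_spec G v x root_blue HW Hr Hf (fun _ => eq_refl) eq_refl eq_refl) as [HW1 Hv1].
  apply runs_seq with (Q1 := fun r t2 => exists G2, r = Some G2 /\ gnodes G2 = gnodes G1 /\
    edge_shape G2 = edge_shape G1 /\ count_emark G2 ERed = 0 /\
    t2 + 9 * count_emark G2 EBlue <= t + 2 + 9 * count_emark G1 EBlue + 16).
  { apply (unmark_loop_spec o v); auto. }
  2:{ intros t2 [G2 [E _]]. discriminate. }
  intros G2' t2 [G2 [E [Hn2 [HE2 [Hred2 Ht2]]]]]. injection E as ->.
  assert (HN2 : node_shape G2 = node_shape G1) by (unfold node_shape; rewrite Hn2; auto).
  assert (HW2 : uniq_ids G2) by (apply (uniq_ids_shape G2 G1); auto).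
  assert (Hv2 : blue_rooted G2 v) by (apply (blue_rooted_shape G2 G1); auto).
  apply runs_rule. destruct (at_blue_root_spec o t2 G2 v (set_root false) Ho HW2 Hv2) as [A B].
  change r_unroot2 with (at_blue_root (set_root false)). rewrite B.
  assert (EN : node_shape (upd_node G2 v (set_root false)) = node_shape (upd_node G v (set_mark NBlue))).
  { apply (node_shape_unroot G G2 v root_blue _ NBlue Hr (fun _ => eq_refl)); [|reflexivity|exact HN2].
    intros y z E. unfold shape in *. simpl. congruence. }
  assert (HL3 : node_label (upd_node G2 v (set_root false)) g = Some lg).
  { rewrite node_label_upd_keep, (node_label_nodes G2 G1 g Hn2) by (intros y; reflexivity).
    unfold G1. rewrite node_label_upd_keep by (intros y; reflexivity). apply HI. }
  destruct (clean_inv_recolour g lg NE NN G _ v HI Hv EN HE2 Hred2 HL3) as [HI3 Hg3].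
  split; [exact HI3|]. unfold clean_potential.
  change (count_emark (upd_node G2 v (set_root false)) EBlue) with (count_emark G2 EBlue).
  change (count_emark G1 EBlue) with (count_emark G EBlue) in Ht2. lia.
Qed.

Lemma clean_loop_spec o g lg NE NN G t : valid_oracle o -> clean_inv g lg NE NN G ->
  runs o (Loop Clean) t G (fun r t' => exists G', r = Some G' /\ clean_inv g lg NE NN G' /\
    t' + clean_potential G' <= t + clean_potential G + 2).
Proof.
  intros Ho HI. eapply runs_weaken.
  - apply (runs_loop o Clean (clean_inv g lg NE NN) (fun _ => True) clean_potential 1); [|exact HI].
    intros H t' HH. apply clean_round; auto.
  - intros r t' [G' [-> [HG' [_ Ht]]]]. eauto.
Qed.

Lemma endpoint_of_degree G w : degree G w <> 0 ->
  In w (map esrc (gedges G) ++ map etgt (gedges G)).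
Proof.
  unfold degree. destruct (filter _ (gedges G)) as [|e l] eqn:Ef; [simpl; lia|intros _].
  assert (He : In e (filter (fun e => Nat.eqb (esrc e) w || Nat.eqb (etgt e) w) (gedges G)))
    by (rewrite Ef; left; auto).
  apply filter_In in He. destruct He as [He1 He2]. apply in_or_app.
  apply orb_true_iff in He2. destruct He2 as [H|H]; apply Nat.eqb_eq in H; subst w;
    [left|right]; apply in_map; auto.
Qed.

(* Each edge has only two endpoints. *)
Lemma count_non_isolated_le G : uniq_ids G -> non_isolated G NBlue -> non_isolated G NGrey ->
  count_nmark G NBlue + count_nmark G NGrey <= 2 * length (gedges G).
Proof.
  intros HW HPb HPg.
  set (P := fun x => nmark_beq (nmk x) NBlue || nmark_beq (nmk x) NGrey).
  assert (E : count_nmark G NBlue + count_nmark G NGrey = length (map nid (filter P (gnodes G)))).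
  { unfold count_nmark, P. cbn [canon]. rewrite !length_map.
    induction (gnodes G) as [|y l IH]; [reflexivity|]. cbn [filter].
    destruct (nmk y); cbn; lia. }
  rewrite E. replace (2 * length (gedges G)) with (length (map esrc (gedges G) ++ map etgt (gedges G)))
    by (rewrite length_app, !length_map; lia).
  apply NoDup_incl_length; [apply NoDup_map_filter, HW|].
  intros w Hw. apply in_map_filter in Hw. destruct Hw as [x [Hx [<- HP]]].
  apply endpoint_of_degree. unfold P in HP. apply orb_true_iff in HP.
  destruct HP as [HP|HP]; apply nmark_beq_spec in HP; [apply HPb|apply HPg];
    apply in_canon_nodes; eauto.
Qed.

Record main_inv (g k NE NN : nat) (G : graph) : Prop := {
  mi_counter : counter_graph g NE NN G;
  mi_label : node_label G g = Some [AInt (Z.of_nat k)];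
  mi_grey : non_isolated G NGrey }.

Definition main_body : cmd := Seq (R r_decrement) (Seq (Loop Relax) (Loop Clean)).

Lemma main_iteration o g k NE NN B G t : valid_oracle o -> main_inv g (S k) NE NN G ->
  count_nmark G NBlue + count_nmark G NGrey <= B ->
  runs o main_body t G (fun r t1 => exists G2, r = Some G2 /\ main_inv g k NE NN G2 /\
    count_nmark G2 NBlue + count_nmark G2 NGrey <= 2 * NE /\ t1 <= t + 260 * B + 109 * NE + 10).
Proof.
  intros Ho [HC HL HP] HB.
  set (G1 := upd_node G g (set_lab [AInt (Z.of_nat (S k) - 1)])).
  apply runs_seq with (Q1 := fun r t1 => t1 <= t + 6 /\ r = Some G1).
  { apply runs_rule. destruct (decrement_spec o t G g Ho (cg_green _ _ _ _ HC) _ HL) as [A ->].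
    replace (Z.ltb 0 (Z.of_nat (S k))) with true by (symmetry; apply Z.ltb_lt; lia). split; [lia|auto]. }
  2:{ intros t1 [_ E]; discriminate. }
  intros G1' t1 [Ht1 E]. injection E as ->.
  assert (HN1 : node_shape G1 = node_shape G) by apply node_shape_set_lab.
  assert (HR1 : relax_inv g [AInt (Z.of_nat k)] B NE NN G1).
  { split.
    - apply (counter_graph_shape g NE NN G1 G); auto. apply HC.
    - unfold G1. destruct (node_label_find G g _ HL) as [x [Hf _]].
      rewrite node_label_set_lab by eauto. do 3 f_equal. lia.
    - apply (non_isolated_shape G1 G); auto.
    - unfold count_nmark. rewrite !(canon_nodes_shape G1 G); auto. }
  apply runs_seq with (Q1 := fun r t' => exists G', r = Some G' /\
    relax_inv g [AInt (Z.of_nat k)] B NE NN G' /\ canon G' (KNodes NBlue) = [] /\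
    t' + relax_potential G' <= t1 + relax_potential G1 + 2).
  { apply relax_loop_spec; auto. }
  2:{ intros t' [G' [E _]]. discriminate. }
  intros GR' t2 [GR [E [[HCR HLR HPR HBR] [Hnb Ht2]]]]. injection E as ->.
  eapply runs_weaken.
  - apply (clean_loop_spec o g [AInt (Z.of_nat k)] NE NN GR); auto.
    split; auto. intros w Hw. rewrite Hnb in Hw. destruct Hw.
  - intros r t' [GC [-> [[HCC HLC HPgC HPbC] Ht3]]]. exists GC. split; [auto|].
    split; [split; auto|]. split.
    + rewrite <- (cg_edges _ _ _ _ HCC). apply count_non_isolated_le; auto. apply HCC.
    + unfold relax_potential, clean_potential in *.
      pose proof (count_emark_le G1 EUn). pose proof (count_emark_le GR EBlue).
      rewrite (cg_edges _ _ _ _ HCR) in *.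
      change (length (gedges G1)) with (length (gedges G)) in *. rewrite (cg_edges _ _ _ _ HC) in *.
      assert (count_nmark G1 NBlue <= B) by (destruct HR1; lia).
      lia.
Qed.

Lemma main_loop_spec o g NE NN : valid_oracle o -> forall k G t B, main_inv g k NE NN G ->
  count_nmark G NBlue + count_nmark G NGrey <= B ->
  runs o (Loop main_body) t G (fun r t' => exists G', r = Some G' /\ counter_graph g NE NN G' /\
    t' <= t + 260 * B + 109 * NE + 22 + k * (629 * NE + 10)).
Proof.
  intros Ho k. induction k as [|k IH]; intros G t B HM HB.
  - apply runs_loop_unfold with (Q1 := fun r t1 => r = None /\ t1 <= t + 6).
    + apply runs_seq with (Q1 := fun r t1 => t1 <= t + 6 /\ r = None); [|intros ? ? [_ E]; discriminate|].
      * apply runs_rule. destruct HM as [HC HL _].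
        destruct (decrement_spec o t G g Ho (cg_green _ _ _ _ HC) _ HL) as [A ->]. split; [lia|auto].
      * intros t1 [Ht1 _]. auto.
    + intros G1 t1 [E _]. discriminate.
    + intros t1 [_ Ht1]. exists G. split; auto. split; [apply HM|lia].
  - apply runs_loop_unfold with (Q1 := fun r t1 => exists G2, r = Some G2 /\ main_inv g k NE NN G2 /\
      count_nmark G2 NBlue + count_nmark G2 NGrey <= 2 * NE /\ t1 <= t + 260 * B + 109 * NE + 10).
    + apply main_iteration; auto.
    + intros G2' t2 [G2 [E [HM2 [HB2 Ht2]]]]. injection E as ->.
      eapply runs_weaken; [apply (IH G2 t2 (2 * NE)); auto|].
      intros r t' [G' [-> [HC' Ht']]]. exists G'. split; auto. split; auto. nia.
    + intros t1 [G2 [E _]]. discriminate.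
Qed.

Definition flag_step : cmd := IfTE (R r_reduce) (R r_set_flag) Skip.

Lemma flag_step_spec o g v G t : valid_oracle o -> uniq_ids G -> blue_rooted G v ->
  length (canon G (KEdges v ERed OOut)) <= 1 -> canon G (KNodes NGreen) = [g] ->
  runs o flag_step t G (fun r t' => t' <= t + 50 /\ forall G', r = Some G' ->
    node_shape G' = node_shape G /\ gedges G' = gedges G /\ True).
Proof.
  intros Ho HW Hv Hred Hg.
  destruct (relabel_out_edge_spec o t G v reduce_body Ho HW Hv Hred relabels_target_reduce) as [A _].
  apply runs_if with (Q1 := fun r t1 => t1 <= t + 20).
  { apply runs_rule. change r_reduce with (relabel_out_edge reduce_body). lia. }
  - intros G1 t1 Ht1. apply runs_rule.
    destruct (set_flag_spec o (t1 + (t1 - t)) G g Ho Hg) as [B [-> | ->]]; (split; [lia|]);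
      intros G' E; [discriminate|]. injection E as <-. split; [apply node_shape_set_lab|auto].
  - intros t1 Ht1. apply runs_skip. split; [lia|]. intros G' E. injection E as <-. auto.
Qed.

Definition final_round : cmd := Seq (R r_root1) (Seq (edge_loop flag_step) (R r_unroot1)).

Definition final_potential (G : graph) : nat := 170 * count_nmark G NBlue + 70 * count_emark G EUn.

Lemma final_round_spec o g NE NN G t : valid_oracle o -> counter_graph g NE NN G ->
  runs o final_round t G (fun r t1 => match r with
    | Some G1 => counter_graph g NE NN G1 /\ t1 + final_potential G1 + 1 <= t + final_potential G
    | None => t1 <= t + 1 /\ True end).
Proof.
  intros Ho HC. pose proof HC as [HW Hg Hr Hred _ _ _].
  apply runs_seq with (Q1 := fun r t1 => (r = None /\ t1 = t + 1) \/
    exists v, In v (canon G (KNodes NBlue)) /\ r = Some (upd_node G v (set_root true)) /\ t1 = t + 2).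
  { apply runs_rule. destruct (r_root1_pick o t G Ho) as [[E ->]|[v [Hv ->]]]; simpl; eauto. }
  2:{ intros t1 [[_ ->]|[v [_ [E _]]]]; [split; [lia|auto]|discriminate]. }
  intros G1' t1 [[E _]|[v [Hv [E ->]]]]; [discriminate|]. injection E as ->.
  destruct (canon_node_find G v NBlue HW Hv) as [x [Hf Hx]].
  eapply runs_weaken.
  - apply (visit_spec o flag_step 50 (fun _ => True) G v Ho); auto.
    intros H t' HWH HvH EN EE Hl _. apply (flag_step_spec o g v); auto.
    rewrite (canon_nodes_shape H (upd_node G v (set_root true))) by auto.
    rewrite (canon_nodes_upd G v (set_root true) x NGreen HW Hf (fun _ => eq_refl) eq_refl). auto.
  - intros r t' [G3 [-> [EN [EE [Hred3 [_ Ht3]]]]]]. split.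
    + apply (counter_graph_shape g NE NN G3 (upd_node G v (set_mark NGrey))); auto.
      apply (counter_graph_recolour g NE NN G v x); auto; [rewrite Hx|]; discriminate.
    + pose proof (count_nmark_recolour G v x NGrey NBlue HW Hf) as Hb. rewrite Hx in Hb. simpl in Hb.
      unfold final_potential, count_nmark in *.
      rewrite (canon_nodes_shape G3 (upd_node G v (set_mark NGrey))) by auto.
      lia.
Qed.

Lemma r_no_deg_inv_pick o t G : valid_oracle o ->
  (canon G (KNodes NUn) = [] /\ r_no_deg_inv o t G = (1, None)) \/
  (exists v, In v (canon G (KNodes NUn)) /\
     r_no_deg_inv o t G = (2, Some (upd_node G v (set_mark NGrey)))).
Proof. intros Ho. exact (iter_pick o t G (KNodes NUn) (fun v => upd_node G v (set_mark NGrey)) Ho). Qed.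

Lemma no_deg_inv_loop_spec o G t : valid_oracle o -> uniq_ids G ->
  runs o (Loop (R r_no_deg_inv)) t G (fun r t' => t' <= t + 3 * length (gnodes G) + 2).
Proof.
  intros Ho HW. eapply runs_weaken.
  - apply (runs_loop o _ uniq_ids (fun _ => True) (fun H => 3 * count_nmark H NUn) 1); [|exact HW].
    intros H t' HWH. apply runs_rule.
    destruct (r_no_deg_inv_pick o t' H Ho) as [[_ ->]|[v [Hv ->]]].
    + simpl. split; [lia|auto].
    + destruct (canon_node_find H v NUn HWH Hv) as [x [Hf Hx]].
      pose proof (count_nmark_recolour H v x NGrey NUn HWH Hf) as Hc. rewrite Hx in Hc. simpl in *.
      split; [apply uniq_ids_upd_node; auto; intros y; reflexivity|lia].
  - intros r t' [G' [-> [_ [_ Ht]]]]. pose proof (count_nmark_le G NUn). lia.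
Qed.

Lemma final_spec o g NE NN G t : valid_oracle o -> counter_graph g NE NN G ->
  runs o Final t G (fun r t' => t' <= t + 180 * NN + 80 * NE + 40).
Proof.
  intros Ho HC.
  apply runs_seq with (Q1 := fun r t1 => exists G1, r = Some G1 /\ counter_graph g NE NN G1 /\
    t1 + final_potential G1 <= t + final_potential G + 2).
  - eapply runs_weaken.
    + apply (runs_loop o final_round (counter_graph g NE NN) (fun _ => True) final_potential 1); [|exact HC].
      intros H t' HH. apply final_round_spec; auto.
    + intros r t' [G1 [-> [HC1 [_ Ht]]]]. eauto.
  - intros G1' t1 [G1 [E [HC1 Ht1]]]. injection E as ->.
    assert (HPhi : final_potential G <= 170 * NN + 70 * NE).
    { unfold final_potential. pose proof (count_nmark_le G NBlue). pose proof (count_emark_le G EUn).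
      rewrite (cg_edges _ _ _ _ HC), (cg_nodes _ _ _ _ HC) in *. lia. }
    destruct HC1 as [HW1 Hg1 _ _ _ HE1 HN1].
    apply runs_seq with (Q1 := fun r t2 => t2 <= t1 + 15 /\ (r = None \/ r = Some G1)).
    + apply runs_if with (Q1 := fun r t2 => t2 <= t1 + 7).
      * apply runs_rule. pose proof (flag_cost o t1 G1 g Ho Hg1). lia.
      * intros G2 t2 Ht2. apply runs_fail. split; [lia|auto].
      * intros t2 Ht2. apply runs_skip. split; [lia|auto].
    + intros G2 t2 [Ht2 [E|E]]; [discriminate|]. injection E as ->.
      apply runs_seq with (Q1 := fun r t3 => t3 <= t2 + 3 + 5 * NE /\
          forall G3, r = Some G3 -> uniq_ids G3 /\ length (gnodes G3) <= NN).
      * apply runs_rule. destruct (delete_counter_spec o t2 G1 g Ho Hg1 HW1) as [A B].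
        split; [lia|]. intros G3 E3. rewrite <- HN1. apply B. auto.
      * intros G3 t3 [Ht3 H3]. destruct (H3 G3 eq_refl) as [HW3 HN3].
        eapply runs_weaken; [apply no_deg_inv_loop_spec; auto|]. intros r t' Ht'. cbv beta in Ht'. lia.
      * intros t3 [Ht3 _]. lia.
    + intros t2 [Ht2 _]. lia.
  - intros t1 [G1 [E _]]. discriminate.
Qed.

Lemma input_root G : input_ok G ->
  exists r x, canon G KRoots = [r] /\ find_node G r = Some x /\ nmk x = NGrey.
Proof.
  intros [ND1 [ND2 [_ [Hgrey [Hroot _]]]]].
  assert (Hl : length (canon G KRoots) = 1) by (simpl; rewrite length_map; auto).
  destruct (canon G KRoots) as [|r [|r' l]] eqn:Er; simpl in Hl; try lia.
  assert (Hr : In r (canon G KRoots)) by (rewrite Er; left; auto).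
  apply in_canon_roots in Hr. destruct Hr as [x [Hin [<- _]]].
  exists (nid x), x. rewrite find_node_of by (exact (conj ND1 ND2) || auto). auto.
Qed.

Definition counter_root (y : node) : node := mkNode (nid y) (nlab y ++ [AInt 0%Z]) NBlue false.

Definition with_counter (G : graph) (r : nat) : graph :=
  let G1 := upd_node G r counter_root in
  let G2 := add_node G1 (mkNode (fresh_nid G1) [AInt 0%Z] NGreen false) in
  add_edge G2 (mkEdge (fresh_eid G2) (fresh_nid G1) r [] EDashed).

Lemma set_counter_spec o t G r x : valid_oracle o -> canon G KRoots = [r] ->
  find_node G r = Some x -> nmk x = NGrey ->
  fst (r_set_counter o t G) <= 5 /\ snd (r_set_counter o t G) = Some (with_counter G r).
Proof.
  intros Ho Hr Hf Hx. unfold r_set_counter.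
  match goal with |- context [iter o t G KRoots ?F] =>
    destruct (iter_singleton o t G KRoots F Ho r Hr) as [A ->] end.
  revert A. rewrite Hf, gopt_some, Hx, guard_true. simpl. split; [lia|reflexivity].
Qed.

Lemma with_counter_spec G r : input_ok G -> canon G KRoots = [r] ->
  exists g, counter_graph g (num_edges G + 1) (num_nodes G + 1) (with_counter G r) /\
    node_label (with_counter G r) g = Some [AInt 0%Z].
Proof.
  intros [ND1 [ND2 [Hend [Hgrey [_ Hedges]]]]] Hr.
  assert (HW : uniq_ids G) by (split; auto).
  set (G1 := upd_node G r counter_root). set (g := fresh_nid G1).
  set (gn := mkNode g [AInt 0%Z] NGreen false). set (G2 := add_node G1 gn).
  set (de := mkEdge (fresh_eid G2) g r [] EDashed).
  assert (HG1 : map nid (gnodes G1) = map nid (gnodes G)) by (apply map_updl; reflexivity).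
  assert (Hg1 : ~ In g (map nid (gnodes G1))) by apply fresh_notin.
  assert (Hg : ~ In g (map nid (gnodes G))) by (rewrite <- HG1; auto).
  assert (Hde : ~ In (fresh_eid G2) (map eid (gedges G2))) by apply fresh_notin.
  assert (Hmk1 : forall y, In y (gnodes G1) -> nmk y = NBlue \/ nmk y = NGrey).
  { intros y Hy. apply in_updl in Hy. destruct Hy as [z [Hz ->]].
    destruct (Nat.eqb (nid z) r); [left; reflexivity|right; auto]. }
  assert (Hroot1 : filter nroot (gnodes G1) = []).
  { apply filter_none. intros y Hy. apply in_updl in Hy. destruct Hy as [z [Hz ->]].
    destruct (Nat.eqb_spec (nid z) r) as [<-|Hne]; [reflexivity|].
    destruct (nroot z) eqn:Ez; auto. exfalso.
    assert (Hz' : In (nid z) (canon G KRoots)) by (apply in_canon_roots; eauto).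
    rewrite Hr in Hz'. destruct Hz' as [E|[]]. auto. }
  assert (HN : gnodes (with_counter G r) = gnodes G1 ++ [gn]) by reflexivity.
  assert (HE : gedges (with_counter G r) = gedges G ++ [de]) by reflexivity.
  exists g. split; [split|].
  - split; [rewrite HN|rewrite HE]; rewrite map_app; apply NoDup_snoc; auto. rewrite HG1. auto.
  - cbn [canon]. rewrite HN, filter_app, filter_none; [reflexivity|].
    intros y Hy. destruct (Hmk1 y Hy) as [-> | ->]; reflexivity.
  - cbn [canon]. rewrite HN, filter_app, Hroot1. reflexivity.
  - unfold count_emark. rewrite HE, filter_app, filter_none; [reflexivity|].
    intros y Hy. destruct (Hedges y Hy) as [-> _]. reflexivity.
  - intros e He. rewrite HE in He. apply in_app_or in He. destruct He as [He|[<-|[]]].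
    + destruct (Hend e He) as [_ Ht]. intros E. apply Hg. rewrite <- E. auto.
    + simpl. intros <-. apply Hg.
      assert (Hrin : In r (canon G KRoots)) by (rewrite Hr; left; auto).
      apply in_canon_roots in Hrin. destruct Hrin as [x [Hx [<- _]]]. apply in_map. auto.
  - rewrite HE, length_app. reflexivity.
  - rewrite HN, length_app. unfold G1. cbn [gnodes upd_node]. rewrite length_map. reflexivity.
  - unfold node_label, find_node. rewrite HN, find_app_none.
    + simpl. rewrite Nat.eqb_refl. reflexivity.
    + intros y Hy. apply Nat.eqb_neq. intros E. apply Hg1. rewrite <- E. apply in_map. auto.
Qed.

Record count_inv (g N0 NE NN : nat) (G : graph) : Prop := {
  ki_counter : counter_graph g NE NN G;
  ki_label : exists j, node_label G g = Some [AInt (Z.of_nat j)] /\ j + count_nmark G NGrey = N0 }.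

Lemma count_round o g N0 NE NN G t : valid_oracle o -> count_inv g N0 NE NN G ->
  runs o (R r_count) t G (fun r t1 => match r with
    | Some G1 => count_inv g N0 NE NN G1 /\ t1 + 9 * count_nmark G1 NGrey + 1 <= t + 9 * count_nmark G NGrey
    | None => t1 <= t + 1 /\ canon G (KNodes NGrey) = [] end).
Proof.
  intros Ho [HC [j [HL Hj]]]. pose proof HC as [HW Hg _ _ _ _ _].
  destruct (count_spec o t G g (Z.of_nat j) Ho HW Hg HL) as [Hnone Hsome].
  apply runs_rule. destruct (canon G (KNodes NGrey)) eqn:Ec.
  { rewrite Hnone by auto. simpl. split; [lia|auto]. }
  rewrite <- Ec in *. destruct Hsome as [A [v [Hv ->]]]; [congruence|].
  destruct (canon_node_find G v NGrey HW Hv) as [x [Hf Hx]].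
  set (G1 := upd_node (upd_node G v blue_unvisited) g (set_lab [AInt (Z.of_nat j + 1)])).
  assert (EN : node_shape G1 = node_shape (upd_node G v (set_mark NBlue))).
  { unfold G1. rewrite node_shape_set_lab. apply node_shape_upd_ext. reflexivity. }
  pose proof (count_nmark_recolour G v x NBlue NGrey HW Hf) as Hgr. rewrite Hx in Hgr. simpl in Hgr.
  assert (Hgr1 : count_nmark G1 NGrey = count_nmark (upd_node G v (set_mark NBlue)) NGrey)
    by (unfold count_nmark; rewrite (canon_nodes_shape G1 _ NGrey EN); reflexivity).
  split; [split|].
  - apply (counter_graph_shape g NE NN G1 _ EN eq_refl (cg_no_red _ _ _ _ HC)).
    apply (counter_graph_recolour g NE NN G v x); auto; [rewrite Hx|]; discriminate.
  - exists (S j). split; [|lia]. unfold G1. rewrite node_label_set_lab; [do 3 f_equal; lia|].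
    destruct (node_label_find G g _ HL) as [xg [Hfg _]].
    rewrite find_node_upd, Hfg by (intros y; reflexivity). simpl. eauto.
  - lia.
Qed.

Lemma count_loop_spec o g N0 NE NN G t : valid_oracle o -> count_inv g N0 NE NN G ->
  runs o (Loop (R r_count)) t G (fun r t' => exists G', r = Some G' /\ count_inv g N0 NE NN G' /\
    canon G' (KNodes NGrey) = [] /\ t' <= t + 9 * count_nmark G NGrey + 2).
Proof.
  intros Ho HI. eapply runs_weaken.
  - apply (runs_loop o _ (count_inv g N0 NE NN) (fun H => canon H (KNodes NGrey) = [])
      (fun H => 9 * count_nmark H NGrey) 1); [|exact HI].
    intros H t' HH. apply count_round; auto.
  - intros r t' [G' [-> [HI' [Hg Ht]]]]. exists G'.
    split; [reflexivity|]. split; [exact HI'|]. split; [exact Hg|lia].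
Qed.

Lemma bellman_ford_cost o G : valid_oracle o -> input_ok G ->
  runs o bellman_ford 0 G (fun _ t' => t' <= 5000 * (num_nodes G * (num_edges G + 1))).
Proof.
  intros Ho HI. destruct (input_root G HI) as [r [x [Hr [Hf Hx]]]].
  destruct (with_counter_spec G r HI Hr) as [g [HC0 HL0]].
  set (n := num_nodes G) in *. set (m := num_edges G) in *.
  assert (Hn : 1 <= n).
  { destruct (find_node_in _ _ _ Hf) as [Hin _]. unfold n, num_nodes.
    destruct (gnodes G); [destruct Hin|simpl; lia]. }
  destruct (set_counter_spec o 0 G r x Ho Hr Hf Hx) as [A1 E1].
  set (S0 := with_counter G r) in *. set (N0 := count_nmark S0 NGrey).
  assert (HN0 : N0 <= n + 1) by (unfold N0; rewrite <- (cg_nodes _ _ _ _ HC0); apply count_nmark_le).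
  apply runs_seq with (Q1 := fun r t1 => r = Some S0 /\ t1 <= 5).
  { apply runs_rule. rewrite E1. split; [reflexivity|lia]. }
  2:{ intros t1 [E _]. discriminate. }
  intros S0' t1 [E Ht1]. injection E as ->.
  apply runs_seq with (Q1 := fun r t2 => exists Gc, r = Some Gc /\ count_inv g N0 (m + 1) (n + 1) Gc /\
    canon Gc (KNodes NGrey) = [] /\ t2 <= t1 + 9 * N0 + 2).
  { apply count_loop_spec; auto. split; [exact HC0|exists 0; split; [exact HL0|reflexivity]]. }
  2:{ intros t2 [Gc [E _]]. discriminate. }
  intros Gc' t2 [Gc [E [[HCc [j [HLc Hj]]] [Hgc Ht2]]]]. injection E as ->.
  assert (HMc : main_inv g j (m + 1) (n + 1) Gc).
  { split; auto. intros w Hw. rewrite Hgc in Hw. destruct Hw. }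
  assert (HBc : count_nmark Gc NBlue + count_nmark Gc NGrey <= n + 1).
  { unfold count_nmark at 2. rewrite Hgc, <- (cg_nodes _ _ _ _ HCc). simpl. rewrite Nat.add_0_r.
    apply count_nmark_le. }
  apply runs_seq with (Q1 := fun r t3 => exists Gm, r = Some Gm /\ counter_graph g (m + 1) (n + 1) Gm /\
    t3 <= t2 + 260 * (n + 1) + 109 * (m + 1) + 22 + j * (629 * (m + 1) + 10)).
  { apply main_loop_spec; auto. }
  2:{ intros t3 [Gm [E _]]. discriminate. }
  intros Gm' t3 [Gm [E [HCm Ht3]]]. injection E as ->.
  eapply runs_weaken; [apply (final_spec o g (m + 1) (n + 1) Gm t3 Ho HCm)|].
  intros res t' Ht'. cbv beta in Ht'.
  assert (j * (629 * (m + 1) + 10) <= (n + 1) * (629 * (m + 1) + 10)) by (apply Nat.mul_le_mono_r; lia).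
  nia.
Qed.

Theorem mainTheorem8 :
  exists c : nat,
    forall G : graph, input_ok G ->
    forall o : oracle, valid_oracle o ->
    exists (fuel : nat) (r : option graph) (t' : nat),
      exec o fuel bellman_ford 0 G = Some (r, t') /\
      t' <= c * (num_nodes G * (num_edges G + 1)).
Proof.
  exists 5000. intros G HI o Ho. exact (runs_exec _ _ _ _ _ (bellman_ford_cost o G Ho HI)).
Qed.
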